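(* A $\mathtt{dCBN}$ term $M$ is $\mathtt{dCBN}$-meaningful if and only if $\mathrm{nf}(\mathcal T^n(M))\neq\emptyset$.
   Context: \textbf{dCBN.} Terms $M,N::=x\mid\lambda x.M\mid MN\mid M[N/x]$ ($M[N/x]$ explicit substitution binding $x$, $M\{N/x\}$ capture-avoiding substitution); list contexts $L::=\square\mid L[N/x]$. $\to_n$ is the closure under all contexts of $L\langle\lambda x.M\rangle N\mapsto L\langle M[N/x]\rangle$ and $M[N/x]\mapsto M\{N/x\}$. Testing contexts $T::=\square\mid TN\mid(\lambda x.T)N$. $M$ is $\mathtt{dCBN}$-meaningful if there is a testing context $T$ with $T\langle M\rangle\to_n^*\lambda x.x$. \textbf{Resource calculus.} Resource terms $m,n::=x\mid\lambda x.m\mid mn\mid m[n/x]\mid\mathrm{der}\,m\mid[m_1,\dots,m_k]$ ($k\ge0$ multisets); $l::=\square\mid l[n/x]$. Reduction (to a resource term or zero $\emptyset$), closed under all contexts: $\mathrm{der}(l\langle[m]\rangle)\to l\langle m\rangle$; $\mathrm{der}(l\langle[m_1,\dots,m_k]\rangle)\to\emptyset$ if $k\ne1$; $l\langle\lambda x.m\rangle n\to l\langle m[n/x]\rangle$; $m[l\langle[n_1,\dots,n_k]\rangle/x]\to l\langle m\{n_{\sigma(1)}/x_1,\dots,n_{\sigma(k)}/x_k\}\rangle$ for each permutation $\sigma$ when $x_1,\dots,x_k$ are exactly the free occurrences of $x$ in $m$, else $\to\emptyset$. \textbf{dCBN Taylor expansion.} $x\sqsubset_n x$; $\lambda x.m\sqsubset_n\lambda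 x.M$ if $m\sqsubset_n M$; $m[n_1,\dots,n_k]\sqsubset_n MN$ and $m[[n_1,\dots,n_k]/x]\sqsubset_n M[N/x]$ ($k\ge0$) if $m\sqsubset_n M$ and all $n_i\sqsubset_n N$. $\mathcal T^n(M)=\{m\mid m\sqsubset_n M\}$; $\mathrm{nf}(\mathcal T^n(M))$ is the set of normal resource terms $p$ with $m\to^*p$ for some $m\in\mathcal T^n(M)$. *)

(* Terms are represented with de Bruijn indices
   (alpha-equivalence is syntactic equality). *)
From Stdlib Require Import List Arith Relations Permutation.
Import ListNotations.

Inductive term : Type :=
| Var : nat -> term
| Lam : term -> term
| App : term -> term -> term
| ES  : term -> term -> term.   (* ES M N = M[N/x], binds index 0 in M *)

Fixpoint lift (c k : nat) (t : term) : term :=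
  match t with
  | Var i => if i <? c then Var i else Var (i + k)
  | Lam t => Lam (lift (S c) k t)
  | App t u => App (lift c k t) (lift c k u)
  | ES t u => ES (lift (S c) k t) (lift c k u)
  end.

Fixpoint subst (j : nat) (N : term) (t : term) : term :=
  match t with
  | Var i => if i <? j then Var i
             else if i =? j then lift 0 j N
             else Var (i - 1)
  | Lam t => Lam (subst (S j) N t)
  | App t u => App (subst j N t) (subst j N u)
  | ES t u => ES (subst (S j) N t) (subst j N u)
  end.

(* list contexts L ::= [] | L[N/x]; the head of the list is the outermost
   explicit substitution *)
Fixpoint plugL (L : list term) (t : term) : term :=
  match L with
  | [] => t
  | N :: L' => ES (plugL L' t) N
  end.

Inductive nstep : term -> term -> Prop :=
| n_dB (L : list term) (M N : term) :
    nstep (App (plugL L (Lam M)) N) (plugL L (ES M (lift 0 (length L) N)))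
| n_s (M N : term) : nstep (ES M N) (subst 0 N M)
| n_lam M M' : nstep M M' -> nstep (Lam M) (Lam M')
| n_appl M M' N : nstep M M' -> nstep (App M N) (App M' N)
| n_appr M N N' : nstep N N' -> nstep (App M N) (App M N')
| n_esl M M' N : nstep M M' -> nstep (ES M N) (ES M' N)
| n_esr M N N' : nstep N N' -> nstep (ES M N) (ES M N').

Definition nsteps : term -> term -> Prop := clos_refl_trans term nstep.

(* testing contexts T ::= [] | T N | (\x.T) N; plugging may capture *)
Inductive tctx : Type :=
| THole : tctx
| TApp : tctx -> term -> tctx
| TLamApp : tctx -> term -> tctx.

Fixpoint plugT (T : tctx) (M : term) : term :=
  match T with
  | THole => M
  | TApp T N => App (plugT T M) N
  | TLamApp T N => App (Lam (plugT T M)) N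
  end.

Definition meaningful (M : term) : Prop :=
  exists T : tctx, nsteps (plugT T M) (Lam (Var 0)).

Inductive rterm : Type :=
| rvar : nat -> rterm
| rlam : rterm -> rterm
| rapp : rterm -> rterm -> rterm
| res  : rterm -> rterm -> rterm        (* m[n/x], binds index 0 in m *)
| rder : rterm -> rterm
| rbag : list rterm -> rterm.           (* multiset [m1,...,mk], as a list *)

Fixpoint rlift (c k : nat) (t : rterm) : rterm :=
  match t with
  | rvar i => if i <? c then rvar i else rvar (i + k)
  | rlam t => rlam (rlift (S c) k t)
  | rapp t u => rapp (rlift c k t) (rlift c k u)
  | res t u => res (rlift (S c) k t) (rlift c k u)
  | rder t => rder (rlift c k t)
  | rbag ts => rbag (map (rlift c k) ts)
  end.

Fixpoint occ (d : nat) (t : rterm) : nat :=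
  match t with
  | rvar i => if i =? d then 1 else 0
  | rlam t => occ (S d) t
  | rapp t u => occ d t + occ d u
  | res t u => occ (S d) t + occ d u
  | rder t => occ d t
  | rbag ts => list_sum (map (occ d) ts)
  end.

(* linear substitution: [lsub d K m ns m'] holds when m' is obtained from m
   by replacing its free occurrences of the variable x (index d at depth d),
   taken from left to right, by the elements of ns in order (each used
   exactly once), where the ns live in a scope with K extra binders
   (those of the list context l), and the other free variables of m are
   re-indexed accordingly (x removed, K binders added). *)
Inductive lsub : nat -> nat -> rterm -> list rterm -> rterm -> Prop :=
| ls_bound d K i : i < d -> lsub d K (rvar i) [] (rvar i)
| ls_hit d K n : lsub d K (rvar d) [n] (rlift 0 d n)
| ls_free d K i : d < i -> lsub d K (rvar i) [] (rvar (i - 1 + K))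
| ls_lam d K m ns m' : lsub (S d) K m ns m' -> lsub d K (rlam m) ns (rlam m')
| ls_app d K m n ns1 ns2 m' n' :
    lsub d K m ns1 m' -> lsub d K n ns2 n' ->
    lsub d K (rapp m n) (ns1 ++ ns2) (rapp m' n')
| ls_es d K m n ns1 ns2 m' n' :
    lsub (S d) K m ns1 m' -> lsub d K n ns2 n' ->
    lsub d K (res m n) (ns1 ++ ns2) (res m' n')
| ls_der d K m ns m' : lsub d K m ns m' -> lsub d K (rder m) ns (rder m')
| ls_bag d K ms ns ms' : lsubs d K ms ns ms' -> lsub d K (rbag ms) ns (rbag ms')
with lsubs : nat -> nat -> list rterm -> list rterm -> list rterm -> Prop :=
| lss_nil d K : lsubs d K [] [] []
| lss_cons d K m ms ns1 ns2 m' ms' :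
    lsub d K m ns1 m' -> lsubs d K ms ns2 ms' ->
    lsubs d K (m :: ms) (ns1 ++ ns2) (m' :: ms').

(* resource list contexts l ::= [] | l[n/x] (head = outermost) *)
Fixpoint rplug (l : list rterm) (t : rterm) : rterm :=
  match l with
  | [] => t
  | n :: l' => res (rplug l' t) n
  end.

(* root rules; [None] is the zero (empty sum) *)
Inductive rbase : rterm -> option rterm -> Prop :=
| r_der1 l m : rbase (rder (rplug l (rbag [m]))) (Some (rplug l m))
| r_der0 l ms : length ms <> 1 -> rbase (rder (rplug l (rbag ms))) None
| r_beta l m n :
    rbase (rapp (rplug l (rlam m)) n)
          (Some (rplug l (res m (rlift 0 (length l) n))))
| r_subst l m ns ns' m' :
    Permutation ns ns' -> lsub 0 (length l) m ns' m' ->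
    rbase (res m (rplug l (rbag ns))) (Some (rplug l m'))
| r_subst0 l m ns : occ 0 m <> length ns ->
    rbase (res m (rplug l (rbag ns))) None.

(* closure under all contexts (zero is absorbing) *)
Inductive rstep : rterm -> option rterm -> Prop :=
| rs_base m r : rbase m r -> rstep m r
| rs_lam m r : rstep m r -> rstep (rlam m) (option_map rlam r)
| rs_appl m n r : rstep m r -> rstep (rapp m n) (option_map (fun m' => rapp m' n) r)
| rs_appr m n r : rstep n r -> rstep (rapp m n) (option_map (fun n' => rapp m n') r)
| rs_esl m n r : rstep m r -> rstep (res m n) (option_map (fun m' => res m' n) r)
| rs_esr m n r : rstep n r -> rstep (res m n) (option_map (fun n' => res m n') r)
| rs_der m r : rstep m r -> rstep (rder m) (option_map rder r)
| rs_bag ms1 m ms2 r : rstep m r ->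
    rstep (rbag (ms1 ++ m :: ms2))
          (option_map (fun m' => rbag (ms1 ++ m' :: ms2)) r).

Definition rsteps : rterm -> rterm -> Prop :=
  clos_refl_trans rterm (fun a b => rstep a (Some b)).

Definition rnormal (p : rterm) : Prop := forall r, ~ rstep p r.

Inductive taylor : rterm -> term -> Prop :=
| t_var i : taylor (rvar i) (Var i)
| t_lam m M : taylor m M -> taylor (rlam m) (Lam M)
| t_app m ns M N : taylor m M -> (forall n, In n ns -> taylor n N) ->
    taylor (rapp m (rbag ns)) (App M N)
| t_es m ns M N : taylor m M -> (forall n, In n ns -> taylor n N) ->
    taylor (res m (rbag ns)) (ES M N).

Definition nf_taylor (M : term) (p : rterm) : Prop :=
  rnormal p /\ exists m, taylor m M /\ rsteps m p.

From Stdlib Require Import List Arith Relations Permutation Lia Setoid Morphisms Classical.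
Import ListNotations.

(* If [p] is a normal resource term reached from a Taylor approximant of [M],
   then [p] still approximates [M] up to dCBN anti-reduction in every position,
   and reading the normal [p] back yields a head normal form of [M].  Head normal
   forms are meaningful: substituting for the head variable and feeding every
   abstraction the term that erases the [k] spine arguments and returns the
   identity reduces to the identity.

   Conversely, if [T<M>] reduces to the identity, Taylor expansion lifts this
   reduction backwards, so some element of the expansion of [T<M>] reduces to
   [\x.x].  Typing [\x.x] with a non-idempotent intersection type and using
   subject expansion types that element, hence its component in the expansion
   of [M].  Typed resource terms never reduce to zero and resource reduction
   decreases size, so that component has a non-zero normal form. *)

(** * de Bruijn arithmetic and dCBN reduction *)

Ltac nat_cases := repeat match goal with
  | |- context [?a <? ?b] => destruct (Nat.ltb_spec a b)
  | |- context [?a =? ?b] => destruct (Nat.eqb_spec a b)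
  end.

Lemma lift_zero t c : lift c 0 t = t.
Proof. revert c; induction t; intros; simpl; f_equal; auto. nat_cases; f_equal; lia. Qed.

Lemma lift_lift_comm t c d j k : d <= c ->
  lift (c + j) k (lift d j t) = lift d j (lift c k t).
Proof.
  revert c d; induction t; intros c d Hdc; simpl.
  - nat_cases; simpl; nat_cases; f_equal; lia.
  - f_equal. apply (IHt (S c)); lia.
  - f_equal; auto.
  - f_equal; auto. apply (IHt1 (S c)); lia.
Qed.

Lemma lift_lift t c d j a : c <= d -> d <= c + j ->
  lift d a (lift c j t) = lift c (j + a) t.
Proof.
  revert c d; induction t; intros c d H1 H2; simpl.
  - nat_cases; simpl; nat_cases; f_equal; lia.
  - f_equal. apply IHt; lia.
  - f_equal; auto.
  - f_equal; auto. apply IHt1; lia.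
Qed.

Lemma subst_lift_cancel t c d k N : c <= d -> d <= c + k ->
  subst d N (lift c (S k) t) = lift c k t.
Proof.
  revert c d; induction t; intros c d H1 H2; simpl.
  - nat_cases; simpl; nat_cases; f_equal; lia.
  - f_equal. apply IHt; lia.
  - f_equal; auto.
  - f_equal; auto. apply IHt1; lia.
Qed.

Lemma subst_lift_comm t j d a N : d <= j ->
  subst (a + j) N (lift d a t) = lift d a (subst j N t).
Proof.
  revert j d; induction t; intros j d H; simpl.
  - nat_cases; simpl; nat_cases; try (f_equal; lia).
    rewrite lift_lift by lia. f_equal. lia.
  - f_equal. rewrite <- Nat.add_succ_r. apply IHt; lia.
  - f_equal; auto.
  - f_equal; auto. rewrite <- Nat.add_succ_r. apply IHt1; lia.
Qed.

Lemma lift_subst_comm M j c k N :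
  lift (j + c) k (subst j N M) = subst j (lift c k N) (lift (S (j + c)) k M).
Proof.
  revert j; induction M; intros j; simpl.
  - nat_cases; simpl; nat_cases; try (f_equal; lia).
    rewrite Nat.add_comm. apply lift_lift_comm; lia.
  - f_equal. apply (IHM (S j)).
  - f_equal; auto.
  - f_equal; auto. apply (IHM1 (S j)).
Qed.

Lemma subst_subst M d j N N' :
  subst (d + j) N (subst d N' M) = subst d (subst j N N') (subst (S (d + j)) N M).
Proof.
  revert d; induction M; intros d; simpl.
  - nat_cases; simpl; nat_cases; try (f_equal; lia).
    + apply (subst_lift_comm N' j 0 d N); lia.
    + rewrite subst_lift_cancel by lia. reflexivity.
  - f_equal. apply (IHM (S d)).
  - f_equal; auto.
  - f_equal; auto. apply (IHM1 (S d)).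
Qed.

Fixpoint liftL (c k : nat) (L : list term) : list term :=
  match L with [] => [] | N :: L' => lift c k N :: liftL (S c) k L' end.

Fixpoint substL (j : nat) (N : term) (L : list term) : list term :=
  match L with [] => [] | P :: L' => subst j N P :: substL (S j) N L' end.

Lemma length_liftL L c k : length (liftL c k L) = length L.
Proof. revert c; induction L; simpl; auto. Qed.

Lemma length_substL L j N : length (substL j N L) = length L.
Proof. revert j; induction L; simpl; auto. Qed.

Lemma lift_plugL L c k X :
  lift c k (plugL L X) = plugL (liftL c k L) (lift (c + length L) k X).
Proof.
  revert c; induction L; intros c; simpl; rewrite ?Nat.add_0_r; auto.
  rewrite IHL, Nat.add_succ_r. reflexivity.
Qed.

Lemma subst_plugL L j N X :
  subst j N (plugL L X) = plugL (substL j N L) (subst (j + length L) N X).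
Proof.
  revert j; induction L; intros j; simpl; rewrite ?Nat.add_0_r; auto.
  rewrite IHL, Nat.add_succ_r. reflexivity.
Qed.

Lemma nstep_dB_eq L M N X : X = lift 0 (length L) N ->
  nstep (App (plugL L (Lam M)) N) (plugL L (ES M X)).
Proof. intros ->. constructor. Qed.

Lemma nstep_lift c k M M' : nstep M M' -> nstep (lift c k M) (lift c k M').
Proof.
  intros H; revert c; induction H; intros c; simpl; try (constructor; auto; fail).
  - rewrite !lift_plugL. simpl. apply nstep_dB_eq.
    rewrite length_liftL, (lift_lift_comm N c 0 (length L) k) by lia. reflexivity.
  - pose proof (lift_subst_comm M 0 c k N) as E; simpl in E; rewrite E; constructor.
Qed.

Lemma nstep_subst j P M M' : nstep M M' -> nstep (subst j P M) (subst j P M').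
Proof.
  intros H; revert j; induction H; intros j; simpl; try (constructor; auto; fail).
  - rewrite !subst_plugL. simpl. apply nstep_dB_eq.
    rewrite length_substL, Nat.add_comm, (subst_lift_comm N j 0 (length L) P) by lia.
    reflexivity.
  - pose proof (subst_subst M 0 j P N) as E; simpl in E; rewrite E; constructor.
Qed.

Lemma nsteps_map (f : term -> term) a b :
  (forall x y, nstep x y -> nstep (f x) (f y)) -> nsteps a b -> nsteps (f a) (f b).
Proof.
  intros Hf H; induction H; [apply rt_step; auto | apply rt_refl | eapply rt_trans; eauto].
Qed.

Lemma nsteps_lam a b : nsteps a b -> nsteps (Lam a) (Lam b).
Proof. apply nsteps_map; constructor; auto. Qed.

Lemma nsteps_appl N a b : nsteps a b -> nsteps (App a N) (App b N).
Proof. apply (nsteps_map (fun x => App x N)); constructor; auto. Qed.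

Lemma nsteps_esl N a b : nsteps a b -> nsteps (ES a N) (ES b N).
Proof. apply (nsteps_map (fun x => ES x N)); constructor; auto. Qed.

Lemma nsteps_plugL L a b : nsteps a b -> nsteps (plugL L a) (plugL L b).
Proof. induction L; simpl; auto using nsteps_esl. Qed.

Lemma nsteps_plugT T a b : nsteps a b -> nsteps (plugT T a) (plugT T b).
Proof. induction T; simpl; auto using nsteps_appl, nsteps_lam. Qed.

Lemma nsteps_lift c k a b : nsteps a b -> nsteps (lift c k a) (lift c k b).
Proof. apply nsteps_map, nstep_lift. Qed.

Lemma nsteps_subst j P a b : nsteps a b -> nsteps (subst j P a) (subst j P b).
Proof. apply nsteps_map, nstep_subst. Qed.

Lemma nsteps_trans a b c : nsteps a b -> nsteps b c -> nsteps a c.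
Proof. apply rt_trans. Qed.

Lemma nsteps_beta M N : nsteps (App (Lam M) N) (subst 0 N M).
Proof.
  eapply rt_trans; apply rt_step; [apply (n_dB [] M N) |].
  simpl. rewrite lift_zero. constructor.
Qed.

(** * Head normal forms are meaningful *)

Fixpoint tctx_comp (T2 T1 : tctx) : tctx :=
  match T2 with
  | THole => T1
  | TApp T N => TApp (tctx_comp T T1) N
  | TLamApp T N => TLamApp (tctx_comp T T1) N
  end.

Lemma plugT_comp T2 T1 X : plugT (tctx_comp T2 T1) X = plugT T2 (plugT T1 X).
Proof. induction T2; simpl; congruence. Qed.

Lemma meaningful_plugT_expand T X Y :
  nsteps (plugT T X) Y -> meaningful Y -> meaningful X.
Proof.
  intros HX [T' HY]. exists (tctx_comp T' T). rewrite plugT_comp.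
  eapply nsteps_trans; [apply nsteps_plugT, HX | exact HY].
Qed.

Lemma meaningful_expand X Y : nsteps X Y -> meaningful Y -> meaningful X.
Proof. apply (meaningful_plugT_expand THole). Qed.

Fixpoint lams (n : nat) (t : term) : term :=
  match n with 0 => t | S n => Lam (lams n t) end.

Lemma subst_lams n t j N : subst j N (lams n t) = lams n (subst (n + j) N t).
Proof. revert j; induction n; intros j; simpl; rewrite ?IHn, ?Nat.add_succ_r; auto. Qed.

Definition eraser (k : nat) : term := lams (S k) (Var 0).

Lemma lift_eraser k c j : lift c j (eraser k) = eraser k.
Proof.
  unfold eraser; revert c; induction k; intros c; simpl in *; rewrite ?IHk; reflexivity.
Qed.

Lemma subst_eraser k j N : subst j N (eraser k) = eraser k.
Proof. unfold eraser. rewrite subst_lams. reflexivity. Qed.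

Inductive spine (h : term) : nat -> term -> Prop :=
| spine_head : spine h 0 h
| spine_app k H N : spine h k H -> spine h (S k) (App H N).

Lemma spine_subst h k H j N : spine h k H -> spine (subst j N h) k (subst j N H).
Proof. induction 1; simpl; constructor; auto. Qed.

Lemma eraser_spine_nsteps a k H : spine (eraser (a + k)) k H -> nsteps H (eraser a).
Proof.
  intros Hs. remember (eraser (a + k)) as h eqn:Eh. revert a Eh.
  induction Hs as [|k H N Hs IH]; intros a ->.
  - rewrite Nat.add_0_r. apply rt_refl.
  - eapply nsteps_trans.
    + apply nsteps_appl, (IH (S a)). f_equal. lia.
    + rewrite <- (subst_eraser a 0 N). apply nsteps_beta.
Qed.

(* Each context [(\x.[]) (eraser k)] replaces index 0 and shifts the other free
   indices down, so [i + 1] of them bring [eraser k] to the head. *)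
Lemma var_spine_meaningful i k H : spine (Var i) k H -> meaningful H.
Proof.
  revert H; induction i; intros H Hs;
    apply (meaningful_plugT_expand (TLamApp THole (eraser k)) H _ (nsteps_beta H _));
    pose proof (spine_subst _ _ _ 0 (eraser k) Hs) as Hs'; simpl in Hs'.
  - exists THole. rewrite lift_zero in Hs'. apply (eraser_spine_nsteps 0 k), Hs'.
  - apply IHi. rewrite Nat.sub_0_r in Hs'. exact Hs'.
Qed.

(* Feeding [eraser k] for every abstraction keeps the head either a variable
   or [eraser k], which in turn consumes the [k] arguments of the spine. *)
Lemma lams_spine_meaningful n h k H :
  spine h k H -> (h = eraser k \/ exists i, h = Var i) -> meaningful (lams n H).
Proof.
  revert h H; induction n; intros h H Hs Hh; simpl.
  - destruct Hh as [-> | [i ->]].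
    + exists THole. apply (eraser_spine_nsteps 0 k), Hs.
    + eapply var_spine_meaningful, Hs.
  - apply (meaningful_plugT_expand (TApp THole (eraser k)) _ _ (nsteps_beta _ _)).
    rewrite subst_lams. eapply IHn; [apply spine_subst, Hs |].
    destruct Hh as [-> | [i ->]]; [left; apply subst_eraser |]. simpl.
    nat_cases; [right; eauto | left; apply lift_eraser | right; eauto].
Qed.

Inductive neutral : term -> Prop :=
| neutral_var i : neutral (Var i)
| neutral_app H N : neutral H -> neutral (App H N).

Inductive hnf : term -> Prop :=
| hnf_neutral H : neutral H -> hnf H
| hnf_lam H : hnf H -> hnf (Lam H).

Lemma neutral_spine H : neutral H -> exists i k, spine (Var i) k H.
Proof.
  induction 1 as [i | H N _ (i & k & Hs)]; [exists i, 0 | exists i, (S k)]; constructor; auto.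
Qed.

Lemma hnf_lams_spine H : hnf H -> exists n i k H0, H = lams n H0 /\ spine (Var i) k H0.
Proof.
  induction 1 as [H Hn | H _ (n & i & k & H0 & -> & Hs)].
  - destruct (neutral_spine H Hn) as (i & k & Hs). exists 0, i, k, H. auto.
  - exists (S n), i, k, H0. auto.
Qed.

Lemma hnf_meaningful H : hnf H -> meaningful H.
Proof.
  intros Hh. destruct (hnf_lams_spine H Hh) as (n & i & k & H0 & -> & Hs).
  eapply lams_spine_meaningful; eauto.
Qed.

(** * Resource reduction *)

Section RstepSomeInd.
Variable P : rterm -> rterm -> Prop.
Hypothesis P_base : forall t t', rbase t (Some t') -> P t t'.
Hypothesis P_lam : forall m m', rstep m (Some m') -> P m m' -> P (rlam m) (rlam m').
Hypothesis P_appl : forall m m' n, rstep m (Some m') -> P m m' -> P (rapp m n) (rapp m' n).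
Hypothesis P_appr : forall m n n', rstep n (Some n') -> P n n' -> P (rapp m n) (rapp m n').
Hypothesis P_esl : forall m m' n, rstep m (Some m') -> P m m' -> P (res m n) (res m' n).
Hypothesis P_esr : forall m n n', rstep n (Some n') -> P n n' -> P (res m n) (res m n').
Hypothesis P_der : forall m m', rstep m (Some m') -> P m m' -> P (rder m) (rder m').
Hypothesis P_bag : forall ms1 m m' ms2, rstep m (Some m') -> P m m' ->
  P (rbag (ms1 ++ m :: ms2)) (rbag (ms1 ++ m' :: ms2)).

Lemma rstep_some_ind : forall t t', rstep t (Some t') -> P t t'.
Proof.
  intros t t' H; remember (Some t') as r eqn:Er; revert t' Er.
  induction H; intros t' Er; try destruct r as [x|]; simpl in Er; inversion Er; subst; eauto.
Qed.
End RstepSomeInd.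

Fixpoint rterm_nested_ind (P : rterm -> Prop)
  (Pvar : forall i, P (rvar i)) (Plam : forall m, P m -> P (rlam m))
  (Papp : forall m n, P m -> P n -> P (rapp m n))
  (Pes : forall m n, P m -> P n -> P (res m n))
  (Pder : forall m, P m -> P (rder m)) (Pbag : forall ts, Forall P ts -> P (rbag ts))
  (t : rterm) : P t :=
  let IH := rterm_nested_ind P Pvar Plam Papp Pes Pder Pbag in
  match t with
  | rvar i => Pvar i
  | rlam m => Plam m (IH m)
  | rapp m n => Papp m n (IH m) (IH n)
  | res m n => Pes m n (IH m) (IH n)
  | rder m => Pder m (IH m)
  | rbag ts => Pbag ts ((fix g (ts : list rterm) : Forall P ts :=
       match ts with
       | [] => Forall_nil _
       | x :: xs => Forall_cons _ (IH x) (g xs)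
       end) ts)
  end.

Scheme lsub_mut := Induction for lsub Sort Prop with lsubs_mut := Induction for lsubs Sort Prop.
Combined Scheme lsub_lsubs_ind from lsub_mut, lsubs_mut.

Lemma lsubs_In d K ms ns ms' m' : lsubs d K ms ns ms' -> In m' ms' ->
  exists m ns1, In m ms /\ lsub d K m ns1 m' /\ incl ns1 ns.
Proof.
  induction 1 as [|d K m ms ns1 ns2 m0' ms' Hm _ IH]; intros Hin; [contradiction |].
  destruct Hin as [<- | Hin].
  - exists m, ns1. split; [left | split]; auto using incl_appl, incl_refl.
  - destruct (IH Hin) as (z & ns3 & ? & ? & ?). exists z, ns3.
    split; [right | split]; auto using incl_appr.
Qed.

Lemma split_list {A} (ns : list A) a b : a + b = length ns ->
  exists ns1 ns2, ns = ns1 ++ ns2 /\ length ns1 = a /\ length ns2 = b.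
Proof.
  intros. exists (firstn a ns), (skipn a ns).
  rewrite firstn_skipn, length_firstn, length_skipn. repeat split; lia.
Qed.

Lemma lsub_exists m d K ns : occ d m = length ns -> exists m', lsub d K m ns m'.
Proof.
  revert d ns; induction m using rterm_nested_ind; intros d ns Hl; simpl in Hl.
  - destruct (Nat.eqb_spec i d) as [-> |].
    + destruct ns as [|n [|]]; simpl in Hl; try lia. eexists; constructor.
    + destruct ns; simpl in Hl; try lia. destruct (Nat.lt_ge_cases i d).
      * eexists; constructor; auto.
      * eexists; apply ls_free; lia.
  - destruct (IHm (S d) ns Hl) as (m' & H). eexists; constructor; eauto.
  - destruct (split_list ns _ _ Hl) as (ns1 & ns2 & -> & L1 & L2).
    destruct (IHm1 d ns1 (eq_sym L1)) as (a & Ha), (IHm2 d ns2 (eq_sym L2)) as (b & Hb).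
    eexists; constructor; eauto.
  - destruct (split_list ns _ _ Hl) as (ns1 & ns2 & -> & L1 & L2).
    destruct (IHm1 (S d) ns1 (eq_sym L1)) as (a & Ha), (IHm2 d ns2 (eq_sym L2)) as (b & Hb).
    eexists; constructor; eauto.
  - destruct (IHm d ns Hl) as (m' & H). eexists; constructor; eauto.
  - enough (exists ts', lsubs d K ts ns ts') as (ts' & Ht) by (eexists; constructor; eauto).
    revert ns Hl; induction H as [|t ts Ht _ IH]; intros ns Hl; simpl in Hl.
    + destruct ns; simpl in Hl; try lia. eexists; constructor.
    + destruct (split_list ns _ _ Hl) as (ns1 & ns2 & -> & L1 & L2).
      destruct (Ht d ns1 (eq_sym L1)) as (a & Ha), (IH ns2 (eq_sym L2)) as (b & Hb).
      eexists; constructor; eauto.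
Qed.

Lemma res_bag_not_normal m ns : ~ rnormal (res m (rbag ns)).
Proof.
  intros Hn. destruct (Nat.eq_dec (occ 0 m) (length ns)) as [E | E].
  - destruct (lsub_exists m 0 0 ns E) as (m' & H).
    apply (Hn (Some m')), rs_base, (r_subst [] m ns ns m'); auto.
  - apply (Hn None), rs_base, (r_subst0 [] m ns); auto.
Qed.

Lemma rnormal_lam m : rnormal (rlam m) -> rnormal m.
Proof. intros Hn r Hr. apply (Hn _ (rs_lam _ _ Hr)). Qed.

Lemma rnormal_appl m n : rnormal (rapp m n) -> rnormal m.
Proof. intros Hn r Hr. apply (Hn _ (rs_appl _ n _ Hr)). Qed.

Lemma rnormal_app_lam m n : ~ rnormal (rapp (rlam m) n).
Proof. intros Hn. apply (Hn _ (rs_base _ _ (r_beta [] m n))). Qed.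

(** * Normal Taylor approximants give head normal forms *)

Inductive approx : rterm -> term -> Prop :=
| approx_red m M M' : nsteps M M' -> approx m M' -> approx m M
| approx_var i : approx (rvar i) (Var i)
| approx_lam m M : approx m M -> approx (rlam m) (Lam M)
| approx_app m ns M N : approx m M -> (forall n, In n ns -> approx n N) ->
    approx (rapp m (rbag ns)) (App M N)
| approx_es m ns M N : approx m M -> (forall n, In n ns -> approx n N) ->
    approx (res m (rbag ns)) (ES M N).

Definition approx_bag (b : rterm) (N : term) : Prop :=
  exists ns, b = rbag ns /\ forall n, In n ns -> approx n N.

Lemma taylor_approx m M : taylor m M -> approx m M.
Proof. induction 1; constructor; auto. Qed.

Lemma approx_lam_inv m M : approx (rlam m) M -> exists M0, nsteps M (Lam M0) /\ approx m M0.
Proof.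
  intros H; remember (rlam m) as x eqn:Ex; revert m Ex.
  induction H; intros m0 Ex; inversion Ex; subst.
  - destruct (IHapprox _ eq_refl) as (M0 & ? & ?). eauto using nsteps_trans.
  - exists M. split; [apply rt_refl | auto].
Qed.

Lemma approx_app_inv m n M : approx (rapp m n) M ->
  exists M1 N, nsteps M (App M1 N) /\ approx m M1 /\ approx_bag n N.
Proof.
  intros H; remember (rapp m n) as x eqn:Ex; revert m n Ex.
  induction H; intros m0 n0 Ex; inversion Ex; subst.
  - destruct (IHapprox _ _ eq_refl) as (M1 & N & ? & ? & ?). eauto 6 using nsteps_trans.
  - exists M, N. repeat split; [apply rt_refl | auto | exists ns; auto].
Qed.

Lemma approx_es_inv m n M : approx (res m n) M ->
  exists M1 N, nsteps M (ES M1 N) /\ approx m M1 /\ approx_bag n N.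
Proof.
  intros H; remember (res m n) as x eqn:Ex; revert m n Ex.
  induction H; intros m0 n0 Ex; inversion Ex; subst.
  - destruct (IHapprox _ _ eq_refl) as (M1 & N & ? & ? & ?). eauto 6 using nsteps_trans.
  - exists M, N. repeat split; [apply rt_refl | auto | exists ns; auto].
Qed.

Lemma approx_bag_absurd ns M : ~ approx (rbag ns) M.
Proof. intros H; remember (rbag ns) as x; induction H; congruence. Qed.

Lemma approx_der_absurd m M : ~ approx (rder m) M.
Proof. intros H; remember (rder m) as x; induction H; congruence. Qed.

Lemma approx_lift m M c k : approx m M -> approx (rlift c k m) (lift c k M).
Proof.
  intros H; revert c; induction H; intros c; simpl.
  - eapply approx_red; eauto using nsteps_lift.
  - destruct (i <? c); constructor.
  - constructor; auto.
  - constructor; auto. intros n Hn. apply in_map_iff in Hn as (x & <- & Hx). auto.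
  - constructor; auto. intros n Hn. apply in_map_iff in Hn as (x & <- & Hx). auto.
Qed.

Lemma approx_subst m M d ns m' N : approx m M -> lsub d 0 m ns m' ->
  (forall n, In n ns -> approx n N) -> approx m' (subst d N M).
Proof.
  intros H; revert d ns m'; induction H as [m M M' R _ IH | i | m M _ IH | m ms M M' _ IH _ IHs
    | m ms M M' _ IH _ IHs]; intros d ns m' Hl Hns.
  - eapply approx_red; eauto using nsteps_subst.
  - inversion Hl; subst; simpl; nat_cases; try lia.
    + constructor.
    + apply approx_lift, Hns. left; auto.
    + rewrite Nat.add_0_r. constructor.
  - inversion Hl; subst; simpl. constructor. eauto.
  - inversion Hl as [| | | |d0 K m0 n ns1 ns2 m0' n' Hm Hn| | |]; subst; simpl.
    inversion Hn as [| | | | | | |d0 K ms0 ns0 ms' Hs]; subst.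
    constructor; [eapply IH; eauto using in_or_app |].
    intros y Hy; destruct (lsubs_In _ _ _ _ _ _ Hs Hy) as (z & ns3 & ? & ? & Hincl).
    eapply IHs; eauto. intros; apply Hns, in_or_app; auto.
  - inversion Hl as [| | | | |d0 K m0 n ns1 ns2 m0' n' Hm Hn| |]; subst; simpl.
    inversion Hn as [| | | | | | |d0 K ms0 ns0 ms' Hs]; subst.
    constructor; [eapply IH; eauto using in_or_app |].
    intros y Hy; destruct (lsubs_In _ _ _ _ _ _ Hs Hy) as (z & ns3 & ? & ? & Hincl).
    eapply IHs; eauto. intros; apply Hns, in_or_app; auto.
Qed.

Lemma approx_rplug_inv l X M : approx (rplug l X) M ->
  exists L M', nsteps M (plugL L M') /\ Forall2 approx_bag l L /\ approx X M'.
Proof.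
  revert M; induction l as [|b l IH]; intros M H; simpl in H.
  - exists [], M. repeat split; auto. apply rt_refl.
  - destruct (approx_es_inv _ _ _ H) as (M1 & N & R & A & B).
    destruct (IH _ A) as (L & M' & R' & F & A'). exists (N :: L), M'.
    repeat split; auto. simpl. eauto using nsteps_trans, nsteps_esl.
Qed.

Lemma approx_rplug l L X Y : Forall2 approx_bag l L -> approx X Y ->
  approx (rplug l X) (plugL L Y).
Proof. induction 1 as [|b N l L (ns & -> & Hns)]; intros; simpl; auto. constructor; auto. Qed.

Lemma approx_rbase t t' M : rbase t (Some t') -> approx t M -> approx t' M.
Proof.
  inversion 1 as [l m| |l m n|l m ns ns' m' Hp Hl|]; subst; intros Ht.
  - exfalso. eapply approx_der_absurd; eauto.
  - destruct (approx_app_inv _ _ _ Ht) as (M1 & N & R & A & (ns & -> & Hns)).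
    destruct (approx_rplug_inv _ _ _ A) as (L & M2 & R2 & F & A2).
    destruct (approx_lam_inv _ _ A2) as (M0 & R3 & A3).
    eapply approx_red.
    { eapply nsteps_trans; [exact R |]. eapply nsteps_trans.
      - apply nsteps_appl. eapply nsteps_trans; [exact R2 | apply nsteps_plugL, R3].
      - apply rt_step, n_dB. }
    apply approx_rplug; auto. rewrite (Forall2_length F). constructor; auto.
    intros y Hy. apply in_map_iff in Hy as (x & <- & Hx). apply approx_lift; auto.
  - destruct (approx_es_inv _ _ _ Ht) as (M1 & N & R & A & (ns0 & E & Hns)).
    destruct l; inversion E; subst. simpl in *.
    eapply approx_red; [eapply nsteps_trans; [exact R | apply rt_step, n_s] |].
    eapply approx_subst; eauto. intros y Hy. apply Hns.
    eapply Permutation_in; [apply Permutation_sym |]; eauto.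
Qed.

Lemma approx_rstep : forall t t', rstep t (Some t') ->
  (forall M, approx t M -> approx t' M) /\ (forall N, approx_bag t N -> approx_bag t' N).
Proof.
  apply rstep_some_ind.
  - intros t t' H. split; [eauto using approx_rbase |].
    intros N (ns & -> & _). inversion H; destruct l; discriminate.
  - intros m m' _ [IH _]. split; [| intros N (ns & ? & _); discriminate].
    intros M (M0 & R & A)%approx_lam_inv. eapply approx_red; eauto. constructor; auto.
  - intros m m' n _ [IH _]. split; [| intros N (ns & ? & _); discriminate].
    intros M (M1 & N & R & A & (ns & -> & B))%approx_app_inv.
    eapply approx_red; eauto. constructor; auto.
  - intros m n n' _ [_ IH]. split; [| intros N (ns & ? & _); discriminate].
    intros M (M1 & N & R & A & B)%approx_app_inv.
    destruct (IH N B) as (ns & -> & Hns). eapply approx_red; eauto. constructor; auto.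
  - intros m m' n _ [IH _]. split; [| intros N (ns & ? & _); discriminate].
    intros M (M1 & N & R & A & (ns & -> & B))%approx_es_inv.
    eapply approx_red; eauto. constructor; auto.
  - intros m n n' _ [_ IH]. split; [| intros N (ns & ? & _); discriminate].
    intros M (M1 & N & R & A & B)%approx_es_inv.
    destruct (IH N B) as (ns & -> & Hns). eapply approx_red; eauto. constructor; auto.
  - intros m m' _ _. split; [| intros N (ns & ? & _); discriminate].
    intros M H. exfalso. eapply approx_der_absurd; eauto.
  - intros ms1 m m' ms2 _ [IH _]. split; [intros M H; exfalso; eapply approx_bag_absurd; eauto |].
    intros N (ns & E & Hns). inversion E; subst. exists (ms1 ++ m' :: ms2). split; auto.
    intros y Hy. apply in_app_or in Hy as [Hy | [<- | Hy]]; auto using in_or_app, in_eq, in_cons.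
Qed.

Lemma approx_rsteps t t' M : rsteps t t' -> approx t M -> approx t' M.
Proof. induction 1; auto. apply approx_rstep; auto. Qed.

Lemma normal_approx_hnf p M : approx p M -> rnormal p ->
  exists H, nsteps M H /\ hnf H /\ ((exists m, p = rlam m) \/ neutral H).
Proof.
  induction 1 as [m M M' R _ IH | i | m M _ IH | m ns M N _ IH _ _ | m ns M N _ _ _ _];
    intros Hn.
  - destruct (IH Hn) as (H & R' & Hh & Hp). exists H. eauto using nsteps_trans.
  - exists (Var i). split; [apply rt_refl | split; [do 2 constructor | right; constructor]].
  - destruct (IH (rnormal_lam _ Hn)) as (H & R & Hh & _).
    exists (Lam H). split; [apply nsteps_lam; auto | split; [apply hnf_lam; auto | left; eauto]].
  - destruct (IH (rnormal_appl _ _ Hn)) as (H & R & _ & [(m0 & ->) | Hne]).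
    + exfalso. eapply rnormal_app_lam; eauto.
    + exists (App H N). split; [apply nsteps_appl; auto |].
      split; [do 2 constructor | right; constructor]; auto.
  - exfalso. eapply res_bag_not_normal; eauto.
Qed.

Theorem nf_taylor_meaningful M : (exists p, nf_taylor M p) -> meaningful M.
Proof.
  intros (p & Hn & m & Ht & Hr).
  destruct (normal_approx_hnf p M (approx_rsteps _ _ _ Hr (taylor_approx _ _ Ht)) Hn)
    as (H & R & Hh & _).
  eapply meaningful_expand; eauto using hnf_meaningful.
Qed.

(** * Taylor expansion under dCBN anti-reduction *)

Lemma map_preimage {A B} (f : A -> B) (P : A -> Prop) (ys : list B) :
  (forall y, In y ys -> exists x, y = f x /\ P x) ->
  exists xs, ys = map f xs /\ forall x, In x xs -> P x.
Proof.
  induction ys as [|y ys IH]; intros H; [exists []; split; [reflexivity | intros _ []] |].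
  destruct (H y (in_eq _ _)) as (x & -> & Hx), IH as (xs & -> & Hxs);
    [intros; apply H, in_cons; auto |].
  exists (x :: xs). split; [reflexivity | intros z [<- | Hz]; auto].
Qed.

Lemma taylor_lift_inv N m c k : taylor m (lift c k N) ->
  exists n, m = rlift c k n /\ taylor n N.
Proof.
  revert m c; induction N as [i | N IH | N1 IH1 N2 IH2 | N1 IH1 N2 IH2]; intros m c H;
    simpl in H.
  - exists (rvar i). destruct (Nat.ltb_spec i c); inversion H; subst; simpl;
      destruct (Nat.ltb_spec i c); split; auto; try lia; constructor.
  - inversion H as [|m' N' Hm| |]; subst. destruct (IH _ _ Hm) as (n & -> & Hn).
    exists (rlam n). split; [reflexivity | constructor; auto].
  - inversion H as [| |m' ns M' N' Hm Hns| ]; subst.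
    destruct (IH1 _ _ Hm) as (a & -> & Ha).
    destruct (map_preimage (rlift c k) (fun y => taylor y N2) ns) as (ys & -> & Hys); auto.
    exists (rapp a (rbag ys)). split; [reflexivity | constructor; auto].
  - inversion H as [| | |m' ns M' N' Hm Hns]; subst.
    destruct (IH1 _ _ Hm) as (a & -> & Ha).
    destruct (map_preimage (rlift c k) (fun y => taylor y N2) ns) as (ys & -> & Hys); auto.
    exists (res a (rbag ys)). split; [reflexivity | constructor; auto].
Qed.

Definition taylor_all (ns : list rterm) (N : term) : Prop := forall n, In n ns -> taylor n N.

Lemma taylor_all_app ns1 ns2 N :
  taylor_all ns1 N -> taylor_all ns2 N -> taylor_all (ns1 ++ ns2) N.
Proof. intros H1 H2 n Hn. apply in_app_or in Hn as [Hn | Hn]; auto. Qed.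

Lemma taylor_lsubs_inv d B N bs' :
  (forall b', In b' bs' -> exists b ns, taylor b B /\ taylor_all ns N /\ lsub d 0 b ns b') ->
  exists bs ns, taylor_all bs B /\ taylor_all ns N /\ lsubs d 0 bs ns bs'.
Proof.
  induction bs' as [|b' bs' IH]; intros H.
  - exists [], []. split; [intros _ [] | split; [intros _ [] | constructor]].
  - destruct (H b' (in_eq _ _)) as (b & ns & T & Tn & L).
    destruct IH as (bs & ns2 & T2 & Tn2 & L2); [intros; apply H, in_cons; auto |].
    exists (b :: bs), (ns ++ ns2). split; [intros x [<- | Hx]; auto |].
    split; [apply taylor_all_app; auto | constructor; auto].
Qed.

Lemma taylor_subst_inv M d N m' : taylor m' (subst d N M) ->
  exists m ns, taylor m M /\ taylor_all ns N /\ lsub d 0 m ns m'.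
Proof.
  revert d m'; induction M as [i | M IH | M1 IH1 M2 IH2 | M1 IH1 M2 IH2]; intros d m' H;
    simpl in H.
  - destruct (Nat.ltb_spec i d); [| destruct (Nat.eqb_spec i d)].
    + inversion H; subst. exists (rvar i), [].
      split; [constructor | split; [intros _ [] | constructor; auto]].
    + subst. destruct (taylor_lift_inv _ _ _ _ H) as (x & -> & Hx).
      exists (rvar d), [x]. split; [constructor | split; [intros y [<- | []]; auto | constructor]].
    + inversion H; subst. exists (rvar i), [].
      split; [constructor | split; [intros _ [] |]].
      rewrite <- (Nat.add_0_r (i - 1)). constructor. lia.
  - inversion H as [|m0 M' Hm| |]; subst. destruct (IH _ _ Hm) as (m & ns & T & Tn & L).
    exists (rlam m), ns. repeat constructor; auto.
  - inversion H as [| |m0 bs' M' N' Hm Hbs| ]; subst.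
    destruct (IH1 _ _ Hm) as (a & ns1 & T & Tn & L).
    destruct (taylor_lsubs_inv d M2 N bs') as (bs & ns2 & T2 & Tn2 & L2); auto.
    exists (rapp a (rbag bs)), (ns1 ++ ns2).
    split; [constructor; auto | split; [apply taylor_all_app; auto | repeat constructor; auto]].
  - inversion H as [| | |m0 bs' M' N' Hm Hbs]; subst.
    destruct (IH1 _ _ Hm) as (a & ns1 & T & Tn & L).
    destruct (taylor_lsubs_inv d M2 N bs') as (bs & ns2 & T2 & Tn2 & L2); auto.
    exists (res a (rbag bs)), (ns1 ++ ns2).
    split; [constructor; auto | split; [apply taylor_all_app; auto | repeat constructor; auto]].
Qed.

Definition taylor_bag (b : rterm) (N : term) : Prop := exists ns, b = rbag ns /\ taylor_all ns N.

Lemma taylor_plugL_inv L X x : taylor x (plugL L X) ->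
  exists l y, x = rplug l y /\ Forall2 taylor_bag l L /\ taylor y X.
Proof.
  revert x; induction L as [|N L IH]; intros x H; simpl in H.
  - exists [], x. repeat split; auto.
  - inversion H as [| | |m ns M' N' Hm Hns]; subst. destruct (IH _ Hm) as (l & y & -> & F & T).
    exists (rbag ns :: l), y. repeat split; auto. constructor; auto. exists ns; auto.
Qed.

Lemma taylor_plugL l L y X : Forall2 taylor_bag l L -> taylor y X ->
  taylor (rplug l y) (plugL L X).
Proof. induction 1 as [|b N l L (ns & -> & Hns)]; intros; simpl; auto. constructor; auto. Qed.

Lemma rsteps_map (f : rterm -> rterm) a b :
  (forall x r, rstep x r -> rstep (f x) (option_map f r)) -> rsteps a b -> rsteps (f a) (f b).
Proof.
  intros Hf H; induction H as [x y H | | ]; [| apply rt_refl | eapply rt_trans; eauto].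
  apply rt_step, (Hf _ (Some y)), H.
Qed.

Lemma rsteps_lam a b : rsteps a b -> rsteps (rlam a) (rlam b).
Proof. apply rsteps_map, rs_lam. Qed.

Lemma rsteps_appl n a b : rsteps a b -> rsteps (rapp a n) (rapp b n).
Proof. apply (rsteps_map (fun x => rapp x n)); intros; apply rs_appl; auto. Qed.

Lemma rsteps_appr m a b : rsteps a b -> rsteps (rapp m a) (rapp m b).
Proof. apply (rsteps_map (fun x => rapp m x)); intros; apply rs_appr; auto. Qed.

Lemma rsteps_esl n a b : rsteps a b -> rsteps (res a n) (res b n).
Proof. apply (rsteps_map (fun x => res x n)); intros; apply rs_esl; auto. Qed.

Lemma rsteps_esr m a b : rsteps a b -> rsteps (res m a) (res m b).
Proof. apply (rsteps_map (fun x => res m x)); intros; apply rs_esr; auto. Qed.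

Lemma rsteps_bag pre bs bs' : Forall2 rsteps bs bs' ->
  rsteps (rbag (pre ++ bs)) (rbag (pre ++ bs')).
Proof.
  intros H; revert pre; induction H as [|b b' bs bs' Hb _ IH]; intros pre; [apply rt_refl |].
  eapply rt_trans.
  - apply (rsteps_map (fun z => rbag (pre ++ z :: bs))); [intros; apply rs_bag; auto | exact Hb].
  - specialize (IH (pre ++ [b'])). rewrite <- !app_assoc in IH. exact IH.
Qed.

Lemma taylor_all_expand N ns' :
  (forall n', In n' ns' -> exists n, taylor n N /\ rsteps n n') ->
  exists ns, taylor_all ns N /\ rsteps (rbag ns) (rbag ns').
Proof.
  intros H. enough (exists ns, taylor_all ns N /\ Forall2 rsteps ns ns') as (ns & T & F)
    by (exists ns; split; [exact T | apply (rsteps_bag []), F]).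
  induction ns' as [|n' ns' IH]; [exists []; split; [intros _ [] | constructor] |].
  destruct (H n' (in_eq _ _)) as (n & Tn & Rn), IH as (ns & T & F); [intros; apply H, in_cons; auto |].
  exists (n :: ns). split; [intros x [<- | Hx]; auto | constructor; auto].
Qed.

Lemma taylor_dB_expand L M N m' :
  taylor m' (plugL L (ES M (lift 0 (length L) N))) ->
  exists m, taylor m (App (plugL L (Lam M)) N) /\ rsteps m m'.
Proof.
  intros H. destruct (taylor_plugL_inv _ _ _ H) as (l & y & -> & F & T).
  inversion T as [| | |m ns M' N' Hm Hns]; subst.
  destruct (map_preimage (rlift 0 (length L)) (fun y => taylor y N) ns) as (ys & -> & Hys).
  { intros x Hx. apply taylor_lift_inv, Hns, Hx. }
  exists (rapp (rplug l (rlam m)) (rbag ys)). split.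
  - constructor; auto. apply taylor_plugL; auto. constructor; auto.
  - apply rt_step, rs_base. rewrite <- (Forall2_length F). apply (r_beta l m (rbag ys)).
Qed.

Lemma taylor_nstep_expand M M' m' : nstep M M' -> taylor m' M' ->
  exists m, taylor m M /\ rsteps m m'.
Proof.
  intros H; revert m'; induction H; intros m' H'.
  - apply taylor_dB_expand, H'.
  - destruct (taylor_subst_inv _ _ _ _ H') as (m0 & ns & T & Tn & L).
    exists (res m0 (rbag ns)). split; [constructor; auto |].
    apply rt_step, rs_base, (r_subst [] m0 ns ns m'); auto.
  - inversion H' as [|m1 M1 H1| |]; subst. destruct (IHnstep _ H1) as (m & T & R).
    exists (rlam m). split; [constructor | apply rsteps_lam]; auto.
  - inversion H' as [| |m1 ns M1 N1 H1 Hns|]; subst. destruct (IHnstep _ H1) as (m & T & R).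
    exists (rapp m (rbag ns)). split; [constructor | apply rsteps_appl]; auto.
  - inversion H' as [| |m1 ns M1 N1 H1 Hns|]; subst.
    destruct (taylor_all_expand N ns) as (bs & T & R); auto.
    exists (rapp m1 (rbag bs)). split; [constructor | apply rsteps_appr]; auto.
  - inversion H' as [| | |m1 ns M1 N1 H1 Hns]; subst. destruct (IHnstep _ H1) as (m & T & R).
    exists (res m (rbag ns)). split; [constructor | apply rsteps_esl]; auto.
  - inversion H' as [| | |m1 ns M1 N1 H1 Hns]; subst.
    destruct (taylor_all_expand N ns) as (bs & T & R); auto.
    exists (res m1 (rbag bs)). split; [constructor | apply rsteps_esr]; auto.
Qed.

Lemma taylor_nsteps_expand M M' m' : nsteps M M' -> taylor m' M' ->
  exists m, taylor m M /\ rsteps m m'.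
Proof.
  intros H; revert m'; induction H as [M M' H | M | M1 M2 M3 _ IH1 _ IH2]; intros m' H'.
  - eapply taylor_nstep_expand; eauto.
  - exists m'. split; [auto | apply rt_refl].
  - destruct (IH2 _ H') as (m2 & T2 & R2), (IH1 _ T2) as (m1 & T1 & R1).
    exists m1. split; [auto | eapply rt_trans; eauto].
Qed.

(** * Non-idempotent intersection types *)

Inductive ty : Type := Star : ty | Arr : list ty -> ty -> ty.

(* Typing environments assign a multiset of types to each de Bruijn index;
   multisets are lists up to [Permutation]. *)
Definition env := nat -> list ty.
Definition env_eq (G D : env) : Prop := forall i, Permutation (G i) (D i).
Definition env_add (G D : env) : env := fun i => G i ++ D i.
Definition env0 : env := fun _ => [].
Definition env1 (i : nat) (A : ty) : env := fun j => if j =? i then [A] else [].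
Definition env_tail (G : env) : env := fun i => G (S i).
Definition env_ins (c k : nat) (G : env) : env :=
  fun i => if i <? c then G i else if i <? c + k then [] else G (i - k).
Definition env_del (d : nat) (G : env) : env := fun i => if i <? d then G i else G (S i).

#[export] Instance env_eq_Equivalence : Equivalence env_eq.
Proof.
  split; [intros G i | intros G D H i | intros G D E H1 H2 i];
    eauto using Permutation_refl, Permutation_sym, Permutation_trans.
Qed.

#[export] Instance env_add_Proper : Proper (env_eq ==> env_eq ==> env_eq) env_add.
Proof. intros a b H c d H' i. apply Permutation_app; auto. Qed.

#[export] Instance env_tail_Proper : Proper (env_eq ==> env_eq) env_tail.
Proof. intros a b H i. apply H. Qed.

#[export] Instance env_ins_Proper c k : Proper (env_eq ==> env_eq) (env_ins c k).
Proof. intros a b H i. unfold env_ins. destruct (i <? c); [| destruct (i <? c + k)]; auto. Qed.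

#[export] Instance env_del_Proper d : Proper (env_eq ==> env_eq) (env_del d).
Proof. intros a b H i. unfold env_del. destruct (i <? d); auto. Qed.

Lemma env_add_comm a b : env_eq (env_add a b) (env_add b a).
Proof. intros i. apply Permutation_app_comm. Qed.

Lemma env_add_assoc a b c : env_eq (env_add a (env_add b c)) (env_add (env_add a b) c).
Proof. intros i. unfold env_add. rewrite app_assoc. reflexivity. Qed.

Lemma env_add_add_swap a b c d :
  env_eq (env_add (env_add a b) (env_add c d)) (env_add (env_add a c) (env_add b d)).
Proof.
  intros i. unfold env_add. rewrite <- !app_assoc.
  apply Permutation_app_head, Permutation_app_swap_app.
Qed.

Lemma env_add_0_r a : env_eq (env_add a env0) a.
Proof. intros i. unfold env_add, env0. rewrite app_nil_r. reflexivity. Qed.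

Lemma env_add_0_l a : env_eq (env_add env0 a) a.
Proof. reflexivity. Qed.

Lemma env_ins_add c k a b : env_eq (env_ins c k (env_add a b)) (env_add (env_ins c k a) (env_ins c k b)).
Proof. intros i. unfold env_ins, env_add. destruct (i <? c); [| destruct (i <? c + k)]; auto. Qed.

Lemma env_del_add d a b : env_eq (env_del d (env_add a b)) (env_add (env_del d a) (env_del d b)).
Proof. intros i. unfold env_del, env_add. destruct (i <? d); auto. Qed.

Lemma env_ins_0 c k : env_eq (env_ins c k env0) env0.
Proof. intros i. unfold env_ins, env0. destruct (i <? c); [| destruct (i <? c + k)]; auto. Qed.

Lemma env_del_0 d : env_eq (env_del d env0) env0.
Proof. intros i. unfold env_del, env0. destruct (i <? d); auto. Qed.

Lemma env_ins_1 c k i A :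
  env_eq (env_ins c k (env1 i A)) (env1 (if i <? c then i else i + k) A).
Proof. intros j. unfold env_ins, env1. nat_cases; simpl; auto; nat_cases; try lia; auto. Qed.

Lemma env_tail_ins c k a : env_eq (env_tail (env_ins (S c) k a)) (env_ins c k (env_tail a)).
Proof.
  intros i. unfold env_tail, env_ins. nat_cases; try lia; auto.
  replace (S i - k) with (S (i - k)) by lia. auto.
Qed.

Lemma env_ins_no_shift a : env_eq (env_ins 0 0 a) a.
Proof. intros i. unfold env_ins. simpl. rewrite Nat.sub_0_r. auto. Qed.

Lemma env_del_tail a : env_eq (env_del 0 a) (env_tail a).
Proof. reflexivity. Qed.

Lemma env_del_1_eq d A : env_eq (env_del d (env1 d A)) env0.
Proof. intros j. unfold env_del, env1, env0. nat_cases; auto; lia. Qed.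

Lemma env_del_1_lt d i A : i < d -> env_eq (env_del d (env1 i A)) (env1 i A).
Proof. intros H j. unfold env_del, env1. nat_cases; auto; lia. Qed.

Lemma env_del_1_gt d i A : d < i -> env_eq (env_del d (env1 i A)) (env1 (i - 1) A).
Proof. intros H j. unfold env_del, env1. nat_cases; auto; lia. Qed.

(* The environment of [m'] when [lsub d 0 m ns m'], [m] is typed in [Gm]
   and the bag [ns] in [D]. *)
Definition env_subst (d : nat) (Gm D : env) : env := env_add (env_del d Gm) (env_ins 0 d D).

#[export] Instance env_subst_Proper d : Proper (env_eq ==> env_eq ==> env_eq) (env_subst d).
Proof. intros a b H c e H'. unfold env_subst. rewrite H, H'. reflexivity. Qed.

Lemma env_subst_add d G1 G2 D1 D2 :
  env_eq (env_subst d (env_add G1 G2) (env_add D1 D2))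
    (env_add (env_subst d G1 D1) (env_subst d G2 D2)).
Proof. unfold env_subst. rewrite env_del_add, env_ins_add, env_add_add_swap. reflexivity. Qed.

Lemma env_tail_subst d a b : env_eq (env_tail (env_subst (S d) a b)) (env_subst d (env_tail a) b).
Proof. intros i. unfold env_tail, env_subst, env_add, env_del, env_ins. simpl. nat_cases; auto; lia. Qed.

Lemma env_subst_head d G D : Permutation (env_subst (S d) G D 0) (G 0).
Proof. unfold env_subst, env_add; simpl. rewrite app_nil_r. reflexivity. Qed.

Lemma env_subst_0 G D : env_eq (env_subst 0 G D) (env_add (env_tail G) D).
Proof. unfold env_subst. rewrite env_del_tail, env_ins_no_shift. reflexivity. Qed.

Lemma env_tail_add a b : env_eq (env_tail (env_add a b)) (env_add (env_tail a) (env_tail b)).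
Proof. reflexivity. Qed.

Lemma env_tail_shift a : env_eq (env_tail (env_ins 0 1 a)) a.
Proof. intros i. unfold env_tail, env_ins. simpl. rewrite Nat.sub_0_r. reflexivity. Qed.

Lemma env_add_shift_head a b : Permutation (env_add a (env_ins 0 1 b) 0) (a 0).
Proof. unfold env_add; simpl. rewrite app_nil_r. reflexivity. Qed.

(* Only terms of the shape of a Taylor expansion (bags exactly in argument
   positions, no dereliction) are typable. *)
Inductive typed : env -> rterm -> ty -> Prop :=
| ty_var G i A : env_eq G (env1 i A) -> typed G (rvar i) A
| ty_lam G D m As B : typed D m B -> Permutation (D 0) As -> env_eq (env_tail D) G ->
    typed G (rlam m) (Arr As B)
| ty_app G G1 G2 m ns As As' B : typed G1 m (Arr As B) -> btyped G2 ns As' ->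
    Permutation As' As -> env_eq G (env_add G1 G2) -> typed G (rapp m (rbag ns)) B
| ty_es G G1 G2 m ns As B : typed G1 m B -> btyped G2 ns As -> Permutation As (G1 0) ->
    env_eq G (env_add (env_tail G1) G2) -> typed G (res m (rbag ns)) B
with btyped : env -> list rterm -> list ty -> Prop :=
| bt_nil G : env_eq G env0 -> btyped G [] []
| bt_cons G G1 G2 n ns A As : typed G1 n A -> btyped G2 ns As -> env_eq G (env_add G1 G2) ->
    btyped G (n :: ns) (A :: As).

Scheme typed_mut := Induction for typed Sort Prop with btyped_mut := Induction for btyped Sort Prop.
Combined Scheme typed_btyped_ind from typed_mut, btyped_mut.

Lemma typed_env_eq G G' t A : env_eq G G' -> typed G t A -> typed G' t A.
Proof. intros E H; destruct H; econstructor; eauto; rewrite <- E; auto. Qed.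

Lemma btyped_env_eq G G' ns As : env_eq G G' -> btyped G ns As -> btyped G' ns As.
Proof. intros E H; destruct H; econstructor; eauto; rewrite <- E; auto. Qed.

#[export] Instance typed_Proper : Proper (env_eq ==> eq ==> eq ==> iff) typed.
Proof. intros G G' E t _ <- A _ <-. split; apply typed_env_eq; [| symmetry]; auto. Qed.

#[export] Instance btyped_Proper : Proper (env_eq ==> eq ==> eq ==> iff) btyped.
Proof. intros G G' E t _ <- A _ <-. split; apply btyped_env_eq; [| symmetry]; auto. Qed.

Lemma typed_app_inv G m n B : typed G (rapp m n) B ->
  exists G1 G2 ns As As', n = rbag ns /\ typed G1 m (Arr As B) /\ btyped G2 ns As' /\
    Permutation As' As /\ env_eq G (env_add G1 G2).
Proof. inversion 1; subst; eauto 10. Qed.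

Lemma typed_es_inv G m n B : typed G (res m n) B ->
  exists G1 G2 ns As, n = rbag ns /\ typed G1 m B /\ btyped G2 ns As /\
    Permutation As (G1 0) /\ env_eq G (env_add (env_tail G1) G2).
Proof. inversion 1; subst; eauto 10. Qed.

Lemma typed_lam_inv G m A : typed G (rlam m) A ->
  exists D As B, A = Arr As B /\ typed D m B /\ Permutation (D 0) As /\ env_eq (env_tail D) G.
Proof. inversion 1; subst; eauto 10. Qed.

Lemma btyped_app G1 ns1 As1 G2 ns2 As2 : btyped G1 ns1 As1 -> btyped G2 ns2 As2 ->
  btyped (env_add G1 G2) (ns1 ++ ns2) (As1 ++ As2).
Proof.
  intros H1 H2; induction H1 as [G E | G Ga Gb n ns A As Hn _ IH E]; simpl.
  - rewrite E, env_add_0_l. exact H2.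
  - econstructor; eauto. rewrite E, <- env_add_assoc. reflexivity.
Qed.

Lemma btyped_split As1 As2 G ns : btyped G ns (As1 ++ As2) ->
  exists ns1 ns2 G1 G2, ns = ns1 ++ ns2 /\ btyped G1 ns1 As1 /\ btyped G2 ns2 As2 /\
    env_eq G (env_add G1 G2).
Proof.
  revert G ns; induction As1 as [|A As1 IH]; intros G ns H; simpl in H.
  - exists [], ns, env0, G. split; [reflexivity | split; [constructor; reflexivity |]].
    split; [exact H | reflexivity].
  - inversion H as [|G' Ga Gb n ns0 A0 As0 Ht Hbt He]; subst.
    destruct (IH _ _ Hbt) as (ns1 & ns2 & Gc & Gd & -> & B1 & B2 & E).
    exists (n :: ns1), ns2, (env_add Ga Gc), Gd. repeat split; auto.
    + econstructor; eauto. reflexivity.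
    + rewrite He, E. apply env_add_assoc.
Qed.

Lemma btyped_swap G n1 n2 ns A1 A2 As : btyped G (n1 :: n2 :: ns) (A1 :: A2 :: As) ->
  btyped G (n2 :: n1 :: ns) (A2 :: A1 :: As).
Proof.
  inversion 1 as [|G' Ga Gb n ns0 A0 As0 Ht Hbt He]; subst.
  inversion Hbt as [|G'' Gc Gd n' ns1 A' As1 Ht1 Hbt1 He1]; subst.
  econstructor; eauto; [econstructor; eauto; reflexivity |].
  rewrite He, He1, !env_add_assoc, (env_add_comm Ga Gc). reflexivity.
Qed.

Lemma btyped_perm_ty As As' G ns : Permutation As As' -> btyped G ns As ->
  exists ns', Permutation ns ns' /\ btyped G ns' As'.
Proof.
  intros P; revert G ns; induction P as [| A As As' _ IH | A1 A2 As | As As' As'' _ IH1 _ IH2];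
    intros G ns Hb.
  - exists ns. auto.
  - inversion Hb as [|G' Ga Gb n ns0 A0 As0 Ht Hbt He]; subst.
    destruct (IH _ _ Hbt) as (ns' & P & B). exists (n :: ns'). split; auto. econstructor; eauto.
  - inversion Hb as [|G' Ga Gb n ns0 A0 As0 Ht Hbt He]; subst.
    inversion Hbt as [|G'' Gc Gd n' ns1 A' As1 Ht1 Hbt1 He1]; subst.
    exists (n' :: n :: ns1). split; [apply perm_swap | apply btyped_swap; auto].
  - destruct (IH1 _ _ Hb) as (ns1 & P1 & B1), (IH2 _ _ B1) as (ns2 & P2 & B2).
    exists ns2. split; [eapply Permutation_trans |]; eauto.
Qed.

Lemma btyped_perm_tm ns ns' G As : Permutation ns ns' -> btyped G ns As ->
  exists As', Permutation As As' /\ btyped G ns' As'.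
Proof.
  intros P; revert G As; induction P as [| n ns ns' _ IH | n1 n2 ns | ns ns' ns'' _ IH1 _ IH2];
    intros G As Hb.
  - exists As. auto.
  - inversion Hb as [|G' Ga Gb n0 ns0 A As0 Ht Hbt He]; subst.
    destruct (IH _ _ Hbt) as (As' & P & B). exists (A :: As'). split; auto. econstructor; eauto.
  - inversion Hb as [|G' Ga Gb n0 ns0 A As0 Ht Hbt He]; subst.
    inversion Hbt as [|G'' Gc Gd n' ns1 A' As1 Ht1 Hbt1 He1]; subst.
    exists (A' :: A :: As1). split; [apply perm_swap | apply btyped_swap; auto].
  - destruct (IH1 _ _ Hb) as (As1 & P1 & B1), (IH2 _ _ B1) as (As2 & P2 & B2).
    exists As2. split; [eapply Permutation_trans |]; eauto.
Qed.

Lemma btyped_in ms1 x ms2 G As : btyped G (ms1 ++ x :: ms2) As ->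
  exists Gx A, typed Gx x A /\ forall y, typed Gx y A -> btyped G (ms1 ++ y :: ms2) As.
Proof.
  revert G As; induction ms1 as [|m ms1 IH]; intros G As H; simpl in *;
    inversion H as [|G' Ga Gb n ns0 A0 As0 Ht Hbt He]; subst.
  - exists Ga, A0. split; auto. intros; econstructor; eauto.
  - destruct (IH _ _ Hbt) as (Gx & A1 & T & F).
    exists Gx, A1. split; auto. intros; econstructor; eauto.
Qed.

Lemma rlift_zero t c : rlift c 0 t = t.
Proof.
  revert c; induction t using rterm_nested_ind; intros c; simpl; try (f_equal; auto; fail).
  - destruct (Nat.ltb_spec i c); f_equal; lia.
  - f_equal. induction H; simpl; f_equal; auto.
Qed.

Lemma rlift_rlift t c d j a : c <= d -> d <= c + j ->
  rlift d a (rlift c j t) = rlift c (j + a) t.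
Proof.
  revert c d; induction t using rterm_nested_ind; intros c d H1 H2; simpl.
  - nat_cases; simpl; nat_cases; f_equal; lia.
  - f_equal. apply IHt; lia.
  - f_equal; auto.
  - f_equal; auto. apply IHt1; lia.
  - f_equal; auto.
  - f_equal. induction H; simpl; f_equal; auto.
Qed.

Lemma lift_typed_btyped :
  (forall G t A, typed G t A -> forall c k, typed (env_ins c k G) (rlift c k t) A) /\
  (forall G ns As, btyped G ns As -> forall c k, btyped (env_ins c k G) (map (rlift c k) ns) As).
Proof.
  apply typed_btyped_ind; intros; simpl.
  - destruct (i <? c) eqn:Ei; constructor; rewrite e, env_ins_1, Ei; reflexivity.
  - econstructor; [apply H | exact p | rewrite env_tail_ins, e; reflexivity].
  - econstructor; [apply H | apply H0 | eauto | rewrite e, env_ins_add; reflexivity].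
  - econstructor; [apply H | apply H0 | exact p | rewrite e, env_ins_add, env_tail_ins; reflexivity].
  - constructor. rewrite e, env_ins_0. reflexivity.
  - econstructor; [apply H | apply H0 | rewrite e, env_ins_add; reflexivity].
Qed.

Lemma lift_typed G t A c k : typed G t A -> typed (env_ins c k G) (rlift c k t) A.
Proof. intros; apply lift_typed_btyped; auto. Qed.

Lemma lift_btyped G ns As c k :
  btyped G ns As -> btyped (env_ins c k G) (map (rlift c k) ns) As.
Proof. intros; apply lift_typed_btyped; auto. Qed.

Lemma rlift_inv_var c k t i : rlift c k t = rvar i ->
  exists j, t = rvar j /\ i = if j <? c then j else j + k.
Proof.
  destruct t as [j | | | | |]; simpl; intros E; try discriminate.
  exists j. split; [reflexivity |]. destruct (j <? c); inversion E; reflexivity.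
Qed.

Lemma rlift_inv_lam c k t m : rlift c k t = rlam m ->
  exists m0, t = rlam m0 /\ m = rlift (S c) k m0.
Proof.
  destruct t as [j | m0 | | | |]; simpl; intros E; try destruct (j <? c); inversion E; eauto.
Qed.

Lemma rlift_inv_bag c k t ns : rlift c k t = rbag ns ->
  exists ns0, t = rbag ns0 /\ ns = map (rlift c k) ns0.
Proof.
  destruct t as [j | | | | | ns0]; simpl; intros E; try destruct (j <? c); inversion E; eauto.
Qed.

Lemma rlift_inv_app c k t m ns : rlift c k t = rapp m (rbag ns) ->
  exists m0 ns0, t = rapp m0 (rbag ns0) /\ m = rlift c k m0 /\ ns = map (rlift c k) ns0.
Proof.
  destruct t as [j | | m0 n0 | | |]; simpl; intros E; try destruct (j <? c); inversion E.
  destruct (rlift_inv_bag _ _ _ _ H1) as (ns0 & -> & ->). eauto.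
Qed.

Lemma rlift_inv_es c k t m ns : rlift c k t = res m (rbag ns) ->
  exists m0 ns0, t = res m0 (rbag ns0) /\ m = rlift (S c) k m0 /\ ns = map (rlift c k) ns0.
Proof.
  destruct t as [j | | | m0 n0 | |]; simpl; intros E; try destruct (j <? c); inversion E.
  destruct (rlift_inv_bag _ _ _ _ H1) as (ns0 & -> & ->). eauto.
Qed.

Lemma lift_typed_btyped_inv :
  (forall G x A, typed G x A -> forall c k t, x = rlift c k t ->
     exists D, env_eq G (env_ins c k D) /\ typed D t A) /\
  (forall G xs As, btyped G xs As -> forall c k ns, xs = map (rlift c k) ns ->
     exists D, env_eq G (env_ins c k D) /\ btyped D ns As).
Proof.
  apply typed_btyped_ind.
  - intros G i A E c k t (j & -> & ->)%eq_sym%rlift_inv_var.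
    exists (env1 j A). split; [rewrite E, env_ins_1; reflexivity | constructor; reflexivity].
  - intros G D m As B _ IH P E c k t (m0 & -> & ->)%eq_sym%rlift_inv_lam.
    destruct (IH (S c) k m0 eq_refl) as (D0 & E0 & T0). exists (env_tail D0). split.
    + rewrite <- E, E0. apply env_tail_ins.
    + econstructor; eauto; [| reflexivity]. rewrite <- P, (E0 0). reflexivity.
  - intros G G1 G2 m ns As As' B _ IH _ IHb P E c k t
      (m0 & ns0 & -> & -> & ->)%eq_sym%rlift_inv_app.
    destruct (IH c k m0 eq_refl) as (D1 & E1 & T1), (IHb c k ns0 eq_refl) as (D2 & E2 & B2).
    exists (env_add D1 D2). split; [rewrite E, E1, E2, env_ins_add; reflexivity |].
    econstructor; eauto. reflexivity.
  - intros G G1 G2 m ns As B _ IH _ IHb P E c k t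
      (m0 & ns0 & -> & -> & ->)%eq_sym%rlift_inv_es.
    destruct (IH (S c) k m0 eq_refl) as (D1 & E1 & T1), (IHb c k ns0 eq_refl) as (D2 & E2 & B2).
    exists (env_add (env_tail D1) D2).
    split; [rewrite E, E1, E2, env_tail_ins, env_ins_add; reflexivity |].
    econstructor; eauto; [| reflexivity]. rewrite P, (E1 0). reflexivity.
  - intros G E c k ns Ens. symmetry in Ens. apply map_eq_nil in Ens as ->.
    exists env0. split; [rewrite E, env_ins_0; reflexivity | constructor; reflexivity].
  - intros G G1 G2 n ns A As _ IH _ IHb E c k ns0 Ens.
    destruct ns0 as [|n0 ns0]; inversion Ens; subst.
    destruct (IH c k n0 eq_refl) as (D1 & E1 & T1), (IHb c k ns0 eq_refl) as (D2 & E2 & B2).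
    exists (env_add D1 D2). split; [rewrite E, E1, E2, env_ins_add; reflexivity |].
    econstructor; eauto. reflexivity.
Qed.

Lemma lift_typed_inv G c k t A : typed G (rlift c k t) A ->
  exists D, env_eq G (env_ins c k D) /\ typed D t A.
Proof. intros; eapply lift_typed_btyped_inv; eauto. Qed.

Lemma lift_btyped_inv G c k ns As : btyped G (map (rlift c k) ns) As ->
  exists D, env_eq G (env_ins c k D) /\ btyped D ns As.
Proof. intros; eapply lift_typed_btyped_inv; eauto. Qed.

Lemma btyped_nil_inv D ns : btyped D ns [] -> ns = [] /\ env_eq D env0.
Proof. inversion 1; auto. Qed.

Lemma btyped_split_env D ns As G1 G2 d :
  btyped D ns As -> Permutation As (env_add G1 G2 d) ->
  exists ns1 ns2 D1 D2, Permutation ns (ns1 ++ ns2) /\ btyped D1 ns1 (G1 d) /\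
    btyped D2 ns2 (G2 d) /\ env_eq D (env_add D1 D2).
Proof.
  intros Hb P. destruct (btyped_perm_ty _ _ _ _ P Hb) as (ns' & Pn & B).
  destruct (btyped_split _ _ _ _ B) as (ns1 & ns2 & D1 & D2 & -> & B1 & B2 & E).
  exists ns1, ns2, D1, D2. auto.
Qed.

Definition admits_subst (Gm : env) (m : rterm) (B : ty) : Prop :=
  forall d ns As D, btyped D ns As -> Permutation As (Gm d) ->
  exists ns' m', Permutation ns ns' /\ lsub d 0 m ns' m' /\ typed (env_subst d Gm D) m' B.

Definition admits_subst_bag (Gm : env) (ms : list rterm) (Bs : list ty) : Prop :=
  forall d ns As D, btyped D ns As -> Permutation As (Gm d) ->
  exists ns' ms', Permutation ns ns' /\ lsubs d 0 ms ns' ms' /\ btyped (env_subst d Gm D) ms' Bs.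

Lemma admits_subst_var G i A : env_eq G (env1 i A) -> admits_subst G (rvar i) A.
Proof.
  intros E d ns As D Hb P. rewrite (E d) in P. unfold env1 in P.
  destruct (Nat.eqb_spec d i) as [<- |].
  - destruct (btyped_perm_ty _ _ _ _ P Hb) as (ns' & Pn & B).
    inversion B as [|G' Ga Gb n ns0 A0 As0 Ht Hbt He]; subst.
    apply btyped_nil_inv in Hbt as [-> Hgb].
    exists [n], (rlift 0 d n). split; [auto | split; [constructor |]].
    unfold env_subst.
    rewrite E, env_del_1_eq, env_add_0_l, He, Hgb, env_add_0_r. apply lift_typed; auto.
  - apply Permutation_sym, Permutation_nil in P as ->.
    apply btyped_nil_inv in Hb as [-> HD]. exists [].
    destruct (Nat.lt_ge_cases i d).
    + exists (rvar i). split; [auto | split; [constructor; auto |]].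
      unfold env_subst; rewrite HD, env_ins_0, env_add_0_r, E, env_del_1_lt by auto.
      constructor; reflexivity.
    + exists (rvar (i - 1 + 0)). split; [auto | split; [constructor; lia |]].
      unfold env_subst; rewrite HD, env_ins_0, env_add_0_r, E, env_del_1_gt, Nat.add_0_r by lia.
      constructor; reflexivity.
Qed.

Lemma admits_subst_lam G D m As B : admits_subst D m B -> Permutation (D 0) As ->
  env_eq (env_tail D) G -> admits_subst G (rlam m) (Arr As B).
Proof.
  intros IH P E d ns As0 D0 Hb HP.
  destruct (IH (S d) ns As0 D0 Hb) as (ns' & m' & Pn & L & T'); [rewrite HP, <- (E d); reflexivity |].
  exists ns', (rlam m'). split; [auto | split; [constructor; auto |]].
  econstructor; [exact T' | rewrite env_subst_head; exact P |].
  rewrite env_tail_subst, E. reflexivity.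
Qed.

Lemma admits_subst_app G G1 G2 m ms As As' B :
  admits_subst G1 m (Arr As B) -> admits_subst_bag G2 ms As' -> Permutation As' As ->
  env_eq G (env_add G1 G2) -> admits_subst G (rapp m (rbag ms)) B.
Proof.
  intros IH IHb P E d ns As0 D Hb HP. rewrite (E d) in HP.
  destruct (btyped_split_env _ _ _ _ _ _ Hb HP) as (ns1 & ns2 & D1 & D2 & Pn & B1 & B2 & HD).
  destruct (IH d ns1 _ D1 B1 (Permutation_refl _)) as (ns1' & m' & P1 & L1 & T1).
  destruct (IHb d ns2 _ D2 B2 (Permutation_refl _)) as (ns2' & ms' & P2 & L2 & T2).
  exists (ns1' ++ ns2'), (rapp m' (rbag ms')).
  split; [rewrite Pn; apply Permutation_app; auto | split; [repeat constructor; auto |]].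
  econstructor; eauto. rewrite E, HD, env_subst_add. reflexivity.
Qed.

Lemma admits_subst_es G G1 G2 m ms As B :
  admits_subst G1 m B -> admits_subst_bag G2 ms As -> Permutation As (G1 0) ->
  env_eq G (env_add (env_tail G1) G2) -> admits_subst G (res m (rbag ms)) B.
Proof.
  intros IH IHb P E d ns As0 D Hb HP. rewrite (E d) in HP.
  destruct (btyped_split_env _ _ _ _ _ _ Hb HP) as (ns1 & ns2 & D1 & D2 & Pn & B1 & B2 & HD).
  destruct (IH (S d) ns1 _ D1 B1 (Permutation_refl _)) as (ns1' & m' & P1 & L1 & T1).
  destruct (IHb d ns2 _ D2 B2 (Permutation_refl _)) as (ns2' & ms' & P2 & L2 & T2).
  exists (ns1' ++ ns2'), (res m' (rbag ms')).
  split; [rewrite Pn; apply Permutation_app; auto | split; [repeat constructor; auto |]].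
  econstructor; eauto; [rewrite env_subst_head; exact P |].
  rewrite env_tail_subst, E, HD, env_subst_add. reflexivity.
Qed.

Lemma admits_subst_bag_nil G : env_eq G env0 -> admits_subst_bag G [] [].
Proof.
  intros E d ns As D Hb HP. rewrite (E d) in HP.
  apply Permutation_sym, Permutation_nil in HP as ->.
  apply btyped_nil_inv in Hb as [-> HD].
  exists [], []. split; [auto | split; [constructor |]].
  constructor. unfold env_subst. rewrite E, HD, env_del_0, env_ins_0, env_add_0_r. reflexivity.
Qed.

Lemma admits_subst_bag_cons G G1 G2 n ms A As :
  admits_subst G1 n A -> admits_subst_bag G2 ms As -> env_eq G (env_add G1 G2) ->
  admits_subst_bag G (n :: ms) (A :: As).
Proof.
  intros IH IHb E d ns As0 D Hb HP. rewrite (E d) in HP.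
  destruct (btyped_split_env _ _ _ _ _ _ Hb HP) as (ns1 & ns2 & D1 & D2 & Pn & B1 & B2 & HD).
  destruct (IH d ns1 _ D1 B1 (Permutation_refl _)) as (ns1' & m' & P1 & L1 & T1).
  destruct (IHb d ns2 _ D2 B2 (Permutation_refl _)) as (ns2' & ms' & P2 & L2 & T2).
  exists (ns1' ++ ns2'), (m' :: ms').
  split; [rewrite Pn; apply Permutation_app; auto | split; [constructor; auto |]].
  econstructor; eauto. rewrite E, HD, env_subst_add. reflexivity.
Qed.

Lemma typed_admits_subst :
  (forall Gm m B, typed Gm m B -> admits_subst Gm m B) /\
  (forall Gm ms Bs, btyped Gm ms Bs -> admits_subst_bag Gm ms Bs).
Proof.
  apply typed_btyped_ind; intros;
    eauto using admits_subst_var, admits_subst_lam, admits_subst_app, admits_subst_es,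
      admits_subst_bag_nil, admits_subst_bag_cons.
Qed.

Lemma subst_typed Gm m B d ns As D :
  typed Gm m B -> btyped D ns As -> Permutation As (Gm d) ->
  exists ns' m', Permutation ns ns' /\ lsub d 0 m ns' m' /\ typed (env_subst d Gm D) m' B.
Proof. intros T; apply typed_admits_subst, T. Qed.

Inductive taylor_like : rterm -> Prop :=
| tl_var i : taylor_like (rvar i)
| tl_lam m : taylor_like m -> taylor_like (rlam m)
| tl_app m ns : taylor_like m -> (forall n, In n ns -> taylor_like n) ->
    taylor_like (rapp m (rbag ns))
| tl_es m ns : taylor_like m -> (forall n, In n ns -> taylor_like n) ->
    taylor_like (res m (rbag ns)).

Definition taylor_like_all (ms : list rterm) : Prop := forall x, In x ms -> taylor_like x.

Lemma taylor_like_all_app ms1 ms2 :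
  taylor_like_all (ms1 ++ ms2) <-> taylor_like_all ms1 /\ taylor_like_all ms2.
Proof.
  split; [intros H; split; intros x Hx; apply H, in_or_app; auto |].
  intros [H1 H2] x Hx. apply in_app_or in Hx as [Hx | Hx]; auto.
Qed.

Lemma taylor_taylor_like m M : taylor m M -> taylor_like m.
Proof. induction 1; constructor; auto. Qed.

Definition taylor_like_bag (b : rterm) : Prop := exists ms, b = rbag ms /\ taylor_like_all ms.

Lemma taylor_like_app_inv m n : taylor_like (rapp m n) -> taylor_like m /\ taylor_like_bag n.
Proof. inversion 1; subst. split; [| exists ns; split]; auto. Qed.

Lemma taylor_like_es_inv m n : taylor_like (res m n) -> taylor_like m /\ taylor_like_bag n.
Proof. inversion 1; subst. split; [| exists ns; split]; auto. Qed.

Definition splits_typing (d : nat) (m : rterm) (ns : list rterm) (m' : rterm) : Prop :=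
  forall G B, typed G m' B ->
  exists Gm D, typed Gm m B /\ btyped D ns (Gm d) /\ env_eq G (env_subst d Gm D).

Definition splits_btyping (d : nat) (ms ns ms' : list rterm) : Prop :=
  forall G Bs, btyped G ms' Bs ->
  exists Gm D, btyped Gm ms Bs /\ btyped D ns (Gm d) /\ env_eq G (env_subst d Gm D).

Lemma splits_typing_var d i j : d <> i -> (forall B, env_eq (env_del d (env1 i B)) (env1 j B)) ->
  splits_typing d (rvar i) [] (rvar j).
Proof.
  intros Hd Hdel G B T. inversion T as [G' i' A' He| | |]; subst.
  exists (env1 i B), env0. split; [constructor; reflexivity |].
  unfold env1 at 1. destruct (Nat.eqb_spec d i); [lia |]. split; [constructor; reflexivity |].
  unfold env_subst. rewrite He, Hdel, env_ins_0, env_add_0_r. reflexivity.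
Qed.

Lemma splits_typing_hit d n : splits_typing d (rvar d) [n] (rlift 0 d n).
Proof.
  intros G B T. destruct (lift_typed_inv _ _ _ _ _ T) as (Dn & E & Tn).
  exists (env1 d B), Dn. split; [constructor; reflexivity |].
  unfold env1 at 1. rewrite Nat.eqb_refl.
  split; [econstructor; [exact Tn | apply bt_nil; reflexivity | rewrite env_add_0_r; reflexivity] |].
  unfold env_subst. rewrite E, env_del_1_eq. reflexivity.
Qed.

Lemma splits_typing_lam d m ns m' :
  splits_typing (S d) m ns m' -> splits_typing d (rlam m) ns (rlam m').
Proof.
  intros IH G A (D & As & B & -> & T & P & E)%typed_lam_inv.
  destruct (IH _ _ T) as (Gm & Dn & Tm & Bn & E').
  exists (env_tail Gm), Dn. split; [| split; [exact Bn |]].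
  - econstructor; eauto; [| reflexivity]. rewrite <- P, (E' 0), env_subst_head. reflexivity.
  - rewrite <- E, E', env_tail_subst. reflexivity.
Qed.

Lemma splits_typing_app d m ms ns1 ns2 m' ms' :
  splits_typing d m ns1 m' -> splits_btyping d ms ns2 ms' ->
  splits_typing d (rapp m (rbag ms)) (ns1 ++ ns2) (rapp m' (rbag ms')).
Proof.
  intros IH1 IH2 G A (G1 & G2 & ms0 & As & As' & E0 & T1 & B2 & P & E)%typed_app_inv.
  injection E0 as <-.
  destruct (IH1 _ _ T1) as (Gm1 & D1 & Tm1 & Bn1 & E1), (IH2 _ _ B2) as (Gm2 & D2 & Tm2 & Bn2 & E2).
  exists (env_add Gm1 Gm2), (env_add D1 D2). split; [econstructor; eauto; reflexivity |].
  split; [apply btyped_app; auto |]. rewrite E, E1, E2, env_subst_add. reflexivity.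
Qed.

Lemma splits_typing_es d m ms ns1 ns2 m' ms' :
  splits_typing (S d) m ns1 m' -> splits_btyping d ms ns2 ms' ->
  splits_typing d (res m (rbag ms)) (ns1 ++ ns2) (res m' (rbag ms')).
Proof.
  intros IH1 IH2 G A (G1 & G2 & ms0 & As & E0 & T1 & B2 & P & E)%typed_es_inv.
  injection E0 as <-.
  destruct (IH1 _ _ T1) as (Gm1 & D1 & Tm1 & Bn1 & E1), (IH2 _ _ B2) as (Gm2 & D2 & Tm2 & Bn2 & E2).
  exists (env_add (env_tail Gm1) Gm2), (env_add D1 D2).
  split; [econstructor; eauto; [| reflexivity] |].
  { rewrite P, (E1 0), env_subst_head. reflexivity. }
  split; [apply btyped_app; auto |].
  rewrite E, E1, E2, env_tail_subst, env_subst_add. reflexivity.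
Qed.

Lemma splits_btyping_nil d : splits_btyping d [] [] [].
Proof.
  intros G Bs B. inversion B as [G' He|]; subst.
  exists env0, env0. split; [constructor; reflexivity | split; [constructor; reflexivity |]].
  unfold env_subst. rewrite He, env_del_0, env_ins_0, env_add_0_r. reflexivity.
Qed.

Lemma splits_btyping_cons d m ms ns1 ns2 m' ms' :
  splits_typing d m ns1 m' -> splits_btyping d ms ns2 ms' ->
  splits_btyping d (m :: ms) (ns1 ++ ns2) (m' :: ms').
Proof.
  intros IH1 IH2 G Bs B. inversion B as [|G' G1 G2 n0 ns0 A As T1 B2 E]; subst.
  destruct (IH1 _ _ T1) as (Gm1 & D1 & Tm1 & Bn1 & E1), (IH2 _ _ B2) as (Gm2 & D2 & Tm2 & Bn2 & E2).
  exists (env_add Gm1 Gm2), (env_add D1 D2). split; [econstructor; eauto; reflexivity |].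
  split; [apply btyped_app; auto |]. rewrite E, E1, E2, env_subst_add. reflexivity.
Qed.

Lemma lsub_splits_typing :
  (forall d K m ns m', lsub d K m ns m' -> K = 0 ->
     (taylor_like m -> splits_typing d m ns m') /\
     (forall ms, m = rbag ms -> taylor_like_all ms ->
        exists ms', m' = rbag ms' /\ splits_btyping d ms ns ms')) /\
  (forall d K ms ns ms', lsubs d K ms ns ms' -> K = 0 -> taylor_like_all ms ->
     splits_btyping d ms ns ms').
Proof.
  apply lsub_lsubs_ind.
  - intros d K i Hi _. split; [| discriminate].
    intros _. apply splits_typing_var; [lia | intros; apply env_del_1_lt, Hi].
  - split; [intros _; apply splits_typing_hit | discriminate].
  - intros d K i Hi ->. split; [| discriminate].
    intros _. rewrite Nat.add_0_r. apply splits_typing_var; [lia | intros; apply env_del_1_gt, Hi].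
  - intros d K m ns m' _ IH ->. split; [| discriminate].
    inversion 1; subst. apply splits_typing_lam, IH; auto.
  - intros d K m n ns1 ns2 m' n' _ IH1 _ IH2 ->. split; [| discriminate].
    intros (Hm & (ms & -> & Hms))%taylor_like_app_inv.
    destruct (proj2 (IH2 eq_refl) ms eq_refl Hms) as (ms' & -> & Hs).
    apply splits_typing_app; auto. apply IH1; auto.
  - intros d K m n ns1 ns2 m' n' _ IH1 _ IH2 ->. split; [| discriminate].
    intros (Hm & (ms & -> & Hms))%taylor_like_es_inv.
    destruct (proj2 (IH2 eq_refl) ms eq_refl Hms) as (ms' & -> & Hs).
    apply splits_typing_es; auto. apply IH1; auto.
  - split; [inversion 1 | discriminate].
  - intros d K ms ns ms' _ IH HK. split; [inversion 1 |].
    intros ms0 E Hms. injection E as <-. exists ms'. auto.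
  - intros. apply splits_btyping_nil.
  - intros d K m ms ns1 ns2 m' ms' _ IH _ IHs -> Hall.
    apply splits_btyping_cons; [apply IH, Hall, in_eq; auto |].
    apply IHs; auto. intros x Hx. apply Hall, in_cons, Hx.
Qed.

Lemma antisubst_typed m ns m' G B : lsub 0 0 m ns m' -> taylor_like m -> typed G m' B ->
  exists Gm D, typed Gm m B /\ btyped D ns (Gm 0) /\ env_eq G (env_add (env_tail Gm) D).
Proof.
  intros Hl Hm T.
  destruct (proj1 (proj1 lsub_splits_typing _ _ _ _ _ Hl eq_refl) Hm _ _ T)
    as (Gm & D & Tm & Bn & E).
  exists Gm, D. rewrite <- env_subst_0. auto.
Qed.

(** * Subject reduction and subject expansion *)

Lemma rlift_rplug_shift (l : list rterm) n :
  rlift 0 (length l) (rlift 0 1 n) = rlift 0 (S (length l)) n.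
Proof. rewrite rlift_rlift by lia. reflexivity. Qed.

Lemma typed_beta_expand l G A m n :
  typed G (rplug l (res m (rlift 0 (length l) n))) A -> typed G (rapp (rplug l (rlam m)) n) A.
Proof.
  revert G A n; induction l as [|b l IH]; intros G A n H; simpl in *.
  - rewrite rlift_zero in H. inversion H as [| | |G' G1 G2 m0 ns As B T Bt P E]; subst.
    econstructor; [econstructor; [exact T | symmetry; exact P | reflexivity] | exact Bt | | exact E].
    reflexivity.
  - inversion H as [| | |G' G1 G2 m0 bs Bs B T1 Bt P E]; subst.
    rewrite <- rlift_rplug_shift in T1. apply IH in T1.
    destruct (typed_app_inv _ _ _ _ T1) as (G3 & G4 & ms' & Cs & Cs' & Hn & T3 & Bt4 & P4 & E1).
    destruct (rlift_inv_bag _ _ _ _ Hn) as (ns0 & -> & ->).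
    destruct (lift_btyped_inv _ _ _ _ _ Bt4) as (D4 & E4 & B4). rewrite E4 in E1.
    apply (ty_app G (env_add (env_tail G3) G2) D4 _ _ Cs Cs' A); auto.
    + econstructor; [exact T3 | exact Bt | | reflexivity].
      rewrite P, (E1 0), env_add_shift_head. reflexivity.
    + rewrite E, E1, env_tail_add, env_tail_shift, <- !env_add_assoc, (env_add_comm D4 G2).
      reflexivity.
Qed.

Lemma typed_beta_reduce l G A m n :
  typed G (rapp (rplug l (rlam m)) n) A -> typed G (rplug l (res m (rlift 0 (length l) n))) A.
Proof.
  revert G A n; induction l as [|b l IH]; intros G A n H; simpl in *.
  - inversion H as [| |G' G1 G2 m0 ns As As' B T1 Bt P E|]; subst.
    inversion T1 as [|G'' D m1 As0 B0 T P1 E1| |]; subst.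
    rewrite rlift_zero. econstructor; [exact T | exact Bt | rewrite P, P1; reflexivity |].
    rewrite E, <- E1. reflexivity.
  - inversion H as [| |G' G1 G2 m0 ns Cs Cs' B T1 Bt P E|]; subst.
    inversion T1 as [| | |G'' G3 G4 m1 bs Bs B0 T3 Bt3 P3 E3]; subst.
    assert (T4 : typed (env_add G3 (env_ins 0 1 G2)) (rapp (rplug l (rlam m)) (rlift 0 1 (rbag ns))) A).
    { apply (ty_app _ G3 (env_ins 0 1 G2) _ _ Cs Cs' A); auto using lift_btyped. reflexivity. }
    apply IH in T4. rewrite rlift_rplug_shift in T4.
    econstructor; [exact T4 | exact Bt3 | rewrite env_add_shift_head; exact P3 |].
    rewrite E, E3, env_tail_add, env_tail_shift, <- !env_add_assoc, (env_add_comm G4 G2).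
    reflexivity.
Qed.

Lemma taylor_like_rlift t c k : taylor_like t -> taylor_like (rlift c k t).
Proof.
  intros H; revert c; induction H; intros c; simpl; [destruct (i <? c) | | |]; constructor; auto;
    intros y Hy; apply in_map_iff in Hy as (x & <- & Hx); auto.
Qed.

Lemma taylor_like_lsub :
  (forall d K m ns m', lsub d K m ns m' -> taylor_like_all ns ->
     (taylor_like m -> taylor_like m') /\ (taylor_like_bag m -> taylor_like_bag m')) /\
  (forall d K ms ns ms', lsubs d K ms ns ms' -> taylor_like_all ns ->
     taylor_like_all ms -> taylor_like_all ms').
Proof.
  apply lsub_lsubs_ind.
  - split; [constructor | intros (ms & ? & _); discriminate].
  - intros d K n Hn. split; [| intros (ms & ? & _); discriminate].
    intros _. apply taylor_like_rlift, Hn, in_eq.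
  - split; [constructor | intros (ms & ? & _); discriminate].
  - intros d K m ns m' _ IH Hn. split; [| intros (ms & ? & _); discriminate].
    inversion 1; subst. constructor. apply IH; auto.
  - intros d K m n ns1 ns2 m' n' _ IH1 _ IH2 (Hn1 & Hn2)%taylor_like_all_app.
    split; [| intros (ms & ? & _); discriminate].
    inversion 1 as [| |m0 ms Hm Hms|]; subst.
    destruct (proj2 (IH2 Hn2)) as (ms' & -> & Hms'); [exists ms; auto |].
    constructor; auto. apply IH1; auto.
  - intros d K m n ns1 ns2 m' n' _ IH1 _ IH2 (Hn1 & Hn2)%taylor_like_all_app.
    split; [| intros (ms & ? & _); discriminate].
    inversion 1 as [| | |m0 ms Hm Hms]; subst.
    destruct (proj2 (IH2 Hn2)) as (ms' & -> & Hms'); [exists ms; auto |].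
    constructor; auto. apply IH1; auto.
  - split; [inversion 1 | intros (ms & ? & _); discriminate].
  - intros d K ms ns ms' _ IH Hn. split; [inversion 1 |].
    intros (ms0 & E & Hms). inversion E; subst. exists ms'. auto.
  - intros d K _ _ x [].
  - intros d K m ms ns1 ns2 m' ms' _ IH _ IHs (Hn1 & Hn2)%taylor_like_all_app Hm x [<- | Hx].
    + apply IH, Hm, in_eq; auto.
    + apply IHs; auto. intros y Hy. apply Hm, in_cons, Hy.
Qed.

Lemma taylor_like_rplug_inv l X : taylor_like (rplug l X) ->
  taylor_like X /\ Forall taylor_like_bag l.
Proof.
  revert X; induction l as [|b l IH]; intros X H; simpl in *; [split; auto |].
  inversion H as [| | |m ns Hm Hns]; subst. destruct (IH _ Hm).
  split; auto. constructor; auto. exists ns; auto.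
Qed.

Lemma taylor_like_rplug l X : Forall taylor_like_bag l -> taylor_like X ->
  taylor_like (rplug l X).
Proof. induction 1 as [|b l (bs & -> & Hbs)]; intros; simpl; auto. constructor; auto. Qed.

Lemma rplug_bag_inv l ns x : rplug l (rbag ns) = rbag x -> l = [] /\ ns = x.
Proof. destruct l; simpl; intros H; inversion H; auto. Qed.

Lemma taylor_like_rbase t t' : rbase t (Some t') -> taylor_like t -> taylor_like t'.
Proof.
  inversion 1 as [l m| |l m n|l m ns ns' m' Hp Hl|]; subst; intros Ht.
  - inversion Ht.
  - inversion Ht as [| |m0 ns Hm Hns|]; subst.
    destruct (taylor_like_rplug_inv _ _ Hm) as [Hlam F]. inversion Hlam; subst.
    apply taylor_like_rplug; auto. simpl. constructor; auto.
    intros y Hy. apply in_map_iff in Hy as (x & <- & Hx). apply taylor_like_rlift; auto.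
  - destruct (taylor_like_es_inv _ _ Ht) as (Hm & (ms & E & Hns)).
    destruct (rplug_bag_inv _ _ _ E) as [-> ->]. simpl in *.
    apply (proj1 taylor_like_lsub _ _ _ _ _ Hl); auto.
    intros y Hy. apply Hns. eapply Permutation_in; [apply Permutation_sym |]; eauto.
Qed.

Lemma taylor_like_rstep : forall t t', rstep t (Some t') ->
  (taylor_like t -> taylor_like t') /\ (taylor_like_bag t -> taylor_like_bag t').
Proof.
  apply rstep_some_ind.
  - intros t t' H. split; [eauto using taylor_like_rbase |].
    intros (ms & -> & _). inversion H; destruct l; discriminate.
  - intros m m' _ [IH _]. split; [| intros (ms & ? & _); discriminate].
    inversion 1; subst. constructor; auto.
  - intros m m' n _ [IH _]. split; [| intros (ms & ? & _); discriminate].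
    intros (Hm & (ms & -> & Hms))%taylor_like_app_inv. constructor; auto.
  - intros m n n' _ [_ IH]. split; [| intros (ms & ? & _); discriminate].
    intros (Hm & (ms & -> & Hms))%taylor_like_app_inv.
    destruct IH as (ms' & -> & Hms'); [exists ms; auto |]. constructor; auto.
  - intros m m' n _ [IH _]. split; [| intros (ms & ? & _); discriminate].
    intros (Hm & (ms & -> & Hms))%taylor_like_es_inv. constructor; auto.
  - intros m n n' _ [_ IH]. split; [| intros (ms & ? & _); discriminate].
    intros (Hm & (ms & -> & Hms))%taylor_like_es_inv.
    destruct IH as (ms' & -> & Hms'); [exists ms; auto |]. constructor; auto.
  - intros m m' _ _. split; [inversion 1 | intros (ms & ? & _); discriminate].
  - intros ms1 m m' ms2 _ [IH _]. split; [inversion 1 |].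
    intros (ms & E & Hms). inversion E; subst. exists (ms1 ++ m' :: ms2). split; auto.
    intros y Hy. apply in_app_or in Hy as [Hy | [<- | Hy]]; auto using in_or_app, in_eq, in_cons.
Qed.

Lemma typed_rbase_expand t t' G A : rbase t (Some t') -> taylor_like t -> typed G t' A ->
  typed G t A.
Proof.
  inversion 1 as [l m| |l m n|l m ns ns' m' Hp Hl|]; subst; intros Ht T.
  - inversion Ht.
  - apply typed_beta_expand, T.
  - destruct (taylor_like_es_inv _ _ Ht) as (Hm & (ms & E & _)).
    destruct (rplug_bag_inv _ _ _ E) as [-> ->]. simpl in *.
    destruct (antisubst_typed _ _ _ _ _ Hl Hm T) as (Gm & D & Tm & Bn & E').
    destruct (btyped_perm_tm _ _ _ _ (Permutation_sym Hp) Bn) as (As' & P' & B').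
    econstructor; eauto. symmetry; auto.
Qed.

Lemma typed_rstep_expand : forall t t', rstep t (Some t') ->
  (taylor_like t -> forall G A, typed G t' A -> typed G t A) /\
  (forall ms ms', t = rbag ms -> t' = rbag ms' -> taylor_like_all ms ->
     forall G As, btyped G ms' As -> btyped G ms As).
Proof.
  apply rstep_some_ind.
  - intros t t' H. split; [eauto using typed_rbase_expand |].
    intros ms ms' ->. inversion H; destruct l; discriminate.
  - intros m m' _ [IH _]. split; [| discriminate].
    intros Ht G A (D & As & B & -> & T & P & E)%typed_lam_inv. inversion Ht; subst.
    econstructor; eauto.
  - intros m m' n _ [IH _]. split; [| discriminate].
    intros (Hm & _)%taylor_like_app_inv G A (G1 & G2 & ns & As & As' & -> & T & B & P & E)%typed_app_inv.
    econstructor; eauto.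
  - intros m n n' _ [_ IH]. split; [| discriminate].
    intros (_ & (ms & -> & Hms))%taylor_like_app_inv G A
      (G1 & G2 & ns & As & As' & -> & T & B & P & E)%typed_app_inv.
    econstructor; eauto.
  - intros m m' n _ [IH _]. split; [| discriminate].
    intros (Hm & _)%taylor_like_es_inv G A (G1 & G2 & ns & As & -> & T & B & P & E)%typed_es_inv.
    econstructor; eauto.
  - intros m n n' _ [_ IH]. split; [| discriminate].
    intros (_ & (ms & -> & Hms))%taylor_like_es_inv G A
      (G1 & G2 & ns & As & -> & T & B & P & E)%typed_es_inv.
    econstructor; eauto.
  - intros m m' _ _. split; [inversion 1 | discriminate].
  - intros ms1 m m' ms2 _ [IH _]. split; [inversion 1 |].
    intros ms ms' E E' Hall G As B. inversion E; inversion E'; subst.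
    destruct (btyped_in _ _ _ _ _ B) as (Gx & A & Tx & F). apply F, IH, Tx.
    apply Hall, in_or_app; right; apply in_eq.
Qed.

Lemma typed_rsteps_expand t t' G A : rsteps t t' -> taylor_like t -> typed G t' A -> typed G t A.
Proof.
  intros H; apply clos_rt_rt1n in H; induction H as [| x y z Hxy _ IH]; intros Hx T; auto.
  apply (typed_rstep_expand _ _ Hxy); auto.
  apply IH; auto. apply (taylor_like_rstep _ _ Hxy); auto.
Qed.

Lemma typed_res_progress G m ns A : typed G (res m (rbag ns)) A ->
  exists t', rstep (res m (rbag ns)) (Some t') /\ typed G t' A.
Proof.
  intros (G1 & G2 & ms & As & E & T & B & P & HG)%typed_es_inv. injection E as <-.
  destruct (subst_typed _ _ _ _ _ _ _ T B P) as (ns' & m' & Pn & L & T').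
  exists m'. split; [apply rs_base, (r_subst [] m ns ns' m'); auto |].
  rewrite HG, <- env_subst_0. exact T'.
Qed.

Lemma typed_rbase_progress t r G A : rbase t r -> typed G t A ->
  exists t', rstep t (Some t') /\ typed G t' A.
Proof.
  destruct 1 as [l m | l ms _ | l m n | l m ns ns' m' _ _ | l m ns _]; intros T;
    try (inversion T; fail).
  - eexists. split; [apply rs_base, r_beta | apply typed_beta_reduce, T].
  - destruct l; [apply typed_res_progress, T | inversion T].
  - destruct l; [apply typed_res_progress, T | inversion T].
Qed.

Lemma typed_rstep_progress t r : rstep t r ->
  (forall G A, typed G t A -> exists t', rstep t (Some t') /\ typed G t' A) /\
  (forall ms G As, t = rbag ms -> btyped G ms As ->
     exists ms', rstep t (Some (rbag ms')) /\ btyped G ms' As).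
Proof.
  induction 1 as [t r H | m r _ [IH _] | m n r _ [IH _] | m n r _ [_ IH] | m n r _ [IH _]
    | m n r _ [_ IH] | m r _ _ | ms1 m ms2 r _ [IH _]].
  - split; [intros; eapply typed_rbase_progress; eauto |].
    intros ms G As ->. inversion H; destruct l; discriminate.
  - split; [| discriminate].
    intros G A (D & As & B & -> & T & P & E)%typed_lam_inv.
    destruct (IH _ _ T) as (x & S & T'). exists (rlam x).
    split; [exact (rs_lam _ _ S) | econstructor; eauto].
  - split; [| discriminate].
    intros G A (G1 & G2 & ns & As & As' & -> & T & B & P & E)%typed_app_inv.
    destruct (IH _ _ T) as (x & S & T'). exists (rapp x (rbag ns)).
    split; [exact (rs_appl _ _ _ S) | econstructor; eauto].
  - split; [| discriminate].
    intros G A (G1 & G2 & ns & As & As' & -> & T & B & P & E)%typed_app_inv.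
    destruct (IH _ _ _ eq_refl B) as (x & S & B'). exists (rapp m (rbag x)).
    split; [exact (rs_appr _ _ _ S) | econstructor; eauto].
  - split; [| discriminate].
    intros G A (G1 & G2 & ns & As & -> & T & B & P & E)%typed_es_inv.
    destruct (IH _ _ T) as (x & S & T'). exists (res x (rbag ns)).
    split; [exact (rs_esl _ _ _ S) | econstructor; eauto].
  - split; [| discriminate].
    intros G A (G1 & G2 & ns & As & -> & T & B & P & E)%typed_es_inv.
    destruct (IH _ _ _ eq_refl B) as (x & S & B'). exists (res m (rbag x)).
    split; [exact (rs_esr _ _ _ S) | econstructor; eauto].
  - split; [intros G A T; inversion T | discriminate].
  - split; [intros G A T; inversion T |].
    intros ms G As E B. inversion E; subst.
    destruct (btyped_in _ _ _ _ _ B) as (Gx & A & Tx & F).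
    destruct (IH _ _ Tx) as (x & S & T'). exists (ms1 ++ x :: ms2).
    split; [exact (rs_bag _ _ _ _ S) | apply F, T'].
Qed.

(** * Typed resource terms normalise *)

Fixpoint rsize (t : rterm) : nat :=
  match t with
  | rvar _ => 1
  | rlam m => S (rsize m)
  | rapp m n => S (rsize m + rsize n)
  | res m n => S (rsize m + rsize n)
  | rder m => S (rsize m)
  | rbag ts => S (list_sum (map rsize ts))
  end.

Definition rsizes (ts : list rterm) : nat := list_sum (map rsize ts).

Lemma rsizes_perm a b : Permutation a b -> rsizes a = rsizes b.
Proof. induction 1; unfold rsizes in *; simpl; lia. Qed.

Lemma rsize_rlift t c k : rsize (rlift c k t) = rsize t.
Proof.
  revert c; induction t using rterm_nested_ind; intros c; simpl; auto.
  - destruct (i <? c); reflexivity.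
  - f_equal. induction H; simpl; auto.
Qed.

(* Linear substitution replaces one occurrence (of size 1) per bag element. *)
Lemma rsize_lsub :
  (forall d K m ns m', lsub d K m ns m' -> rsize m' + length ns = rsize m + rsizes ns) /\
  (forall d K ms ns ms', lsubs d K ms ns ms' -> rsizes ms' + length ns = rsizes ms + rsizes ns).
Proof.
  apply lsub_lsubs_ind; intros; unfold rsizes in *; simpl in *;
    rewrite ?length_app, ?map_app, ?list_sum_app, ?rsize_rlift in *; lia.
Qed.

Lemma rsize_rplug l X : rsize (rplug l X) = rsize X + list_sum (map (fun b => S (rsize b)) l).
Proof. induction l; simpl; rewrite ?IHl; lia. Qed.

Lemma rsize_rstep : forall t t', rstep t (Some t') -> rsize t' < rsize t.
Proof.
  apply rstep_some_ind; intros; simpl; try lia.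
  - inversion H as [l m| |l m n|l m ns ns' m' Hp Hl|]; subst; simpl;
      rewrite ?rsize_rplug; simpl; rewrite ?rsize_rlift; try lia.
    pose proof (proj1 rsize_lsub _ _ _ _ _ Hl). pose proof (rsizes_perm _ _ Hp).
    pose proof (Permutation_length Hp). unfold rsizes in *. lia.
  - rewrite !map_app, !list_sum_app. simpl. lia.
Qed.

Lemma typed_normalizes t G A : typed G t A -> exists p, rnormal p /\ rsteps t p.
Proof.
  remember (rsize t) as s eqn:Es. revert t G A Es.
  induction s as [s IH] using lt_wf_ind; intros t G A -> T.
  destruct (classic (rnormal t)) as [Hn | Hn]; [exists t; split; [auto | apply rt_refl] |].
  apply not_all_not_ex in Hn as (r & Hr).
  destruct (proj1 (typed_rstep_progress _ _ Hr) _ _ T) as (t' & S & T').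
  destruct (IH (rsize t') (rsize_rstep _ _ S) t' G A eq_refl T') as (p & Hp & Rp).
  exists p. split; [auto | eapply rt_trans; [apply rt_step |]; eauto].
Qed.

Lemma typed_plugT_inv T M m G A : taylor m (plugT T M) -> typed G m A ->
  exists m0 G0 A0, taylor m0 M /\ typed G0 m0 A0.
Proof.
  revert m G A; induction T as [| T IH N | T IH N]; intros m G A Ht Ty; simpl in Ht; eauto.
  - inversion Ht as [| |m1 ns M1 N1 H1 _|]; subst.
    destruct (typed_app_inv _ _ _ _ Ty) as (G1 & G2 & ns' & As & As' & _ & T1 & _). eauto.
  - inversion Ht as [| |m1 ns M1 N1 H1 _|]; subst.
    inversion H1 as [|m2 M2 H2| |]; subst.
    destruct (typed_app_inv _ _ _ _ Ty) as (G1 & G2 & ns' & As & As' & _ & T1 & _).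
    destruct (typed_lam_inv _ _ _ T1) as (D & Bs & B & _ & T2 & _). eauto.
Qed.

Theorem meaningful_nf_taylor M : meaningful M -> exists p, nf_taylor M p.
Proof.
  intros (T & H).
  destruct (taylor_nsteps_expand _ _ _ H (t_lam _ _ (t_var 0))) as (m & Tm & Rm).
  assert (Tid : typed env0 (rlam (rvar 0)) (Arr [Star] Star)).
  { apply (ty_lam env0 (env1 0 Star) (rvar 0) [Star] Star); [constructor | |]; reflexivity. }
  pose proof (typed_rsteps_expand _ _ _ _ Rm (taylor_taylor_like _ _ Tm) Tid) as Ty.
  destruct (typed_plugT_inv _ _ _ _ _ Tm Ty) as (m0 & G0 & A0 & Tm0 & Ty0).
  destruct (typed_normalizes _ _ _ Ty0) as (p & Hp & Rp).
  exists p. split; [auto | exists m0; auto].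
Qed.

Theorem mainTheorem12 (M : term) :
  meaningful M <-> exists p : rterm, nf_taylor M p.
Proof. split; [apply meaningful_nf_taylor | apply nf_taylor_meaningful]. Qed.
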